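(* Let $\lambda_0<\lambda_1$ be real numbers, let $\lambda_2,\dots,\lambda_n\in\mathbb{C}$, and suppose that $E_{(\lambda_2,\dots,\lambda_n)}$ is an extended Chebyshev space over $[a,b]$ ($a<b$) that is closed under complex conjugation. Let $p_{n,0},\dots,p_{n,n}$ be a Bernstein basis of $E_{(\lambda_0,\dots,\lambda_n)}$ for $\{a,b\}$ consisting of real-valued functions that are non-negative on $[a,b]$. Then there exist unique points $t_0,\dots,t_n\in[a,b]$ and unique positive coefficients $\alpha_0,\dots,\alpha_n$ such that the operator $B_n:C[a,b]\to E_{(\lambda_0,\dots,\lambda_n)}$, $B_nf=\sum_{k=0}^nf(t_k)\alpha_kp_{n,k}$, satisfies $B_n(e^{\lambda_0x})=e^{\lambda_0x}$ and $B_n(e^{\lambda_1x})=e^{\lambda_1x}$.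
   Context: For complex numbers $\mu_0,\dots,\mu_m$, the space of exponential polynomials is $E_{(\mu_0,\dots,\mu_m)}=\{f\in C^\infty(\mathbb{R},\mathbb{C}):(\frac{d}{dx}-\mu_0)\cdots(\frac{d}{dx}-\mu_m)f=0\}$ (of dimension $m+1$), considered as functions on $[a,b]$. It is closed under complex conjugation if $\bar f$ belongs to it whenever $f$ does. An $(m+1)$-dimensional space $V\subset C^m([a,b],\mathbb{C})$ is an extended Chebyshev space over $[a,b]$ if every non-zero $f\in V$ has at most $m$ zeros in $[a,b]$ counting multiplicities. A function has a zero of order $k$ at $c$ if $f(c)=\dots=f^{(k-1)}(c)=0\neq f^{(k)}(c)$ (one-sided at endpoints); a Bernstein basis for $\{a,b\}$ of an $(m+1)$-dimensional space is a system $p_{m,0},\dots,p_{m,m}$ in it with $p_{m,k}$ having a zero of order exactly $k$ at $a$ and exactly $m-k$ at $b$. *)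

From Stdlib Require Import Reals List.
From Coquelicot Require Import Coquelicot.
Import ListNotations.
Open Scope R_scope.

Definition CDn (k : nat) (f : R -> C) (x : R) : C :=
  (Derive_n (fun t => Re (f t)) k x, Derive_n (fun t => Im (f t)) k x).

Definition Csmooth (f : R -> C) : Prop :=
  forall (k : nat) (x : R),
    ex_derive_n (fun t => Re (f t)) k x /\ ex_derive_n (fun t => Im (f t)) k x.

Definition apply_ops (mus : list C) (f : R -> C) : R -> C :=
  fold_right (fun mu g => fun x => Cminus (CDn 1 g x) (Cmult mu (g x))) f mus.

Definition ExpPoly (mus : list C) (f : R -> C) : Prop :=
  Csmooth f /\ forall x : R, apply_ops mus f x = RtoC 0.

Definition zero_order_ge (f : R -> C) (c : R) (k : nat) : Prop :=
  forall j : nat, (j < k)%nat -> CDn j f c = RtoC 0.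

Definition zero_order_exact (f : R -> C) (c : R) (k : nat) : Prop :=
  zero_order_ge f c k /\ CDn k f c <> RtoC 0.

(* Zeros are given as a list of (point, multiplicity)
   pairs with distinct points. *)
Definition ExtChebyshev (m : nat) (V : (R -> C) -> Prop) (a b : R) : Prop :=
  forall f : R -> C, V f ->
    (exists x, a <= x <= b /\ f x <> RtoC 0) ->
    forall zs : list (R * nat),
      NoDup (map fst zs) ->
      (forall z, In z zs -> a <= fst z <= b /\ zero_order_ge f (fst z) (snd z)) ->
      (fold_right (fun z s => (snd z + s)%nat) 0%nat zs <= m)%nat.

Definition closed_under_conj (V : (R -> C) -> Prop) : Prop :=
  forall f, V f -> V (fun x => Cconj (f x)).

Definition BernsteinBasis (m : nat) (V : (R -> C) -> Prop) (a b : R)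
    (p : nat -> R -> C) : Prop :=
  forall k : nat, (k <= m)%nat ->
    V (p k) /\ zero_order_exact (p k) a k /\ zero_order_exact (p k) b (m - k).

Fixpoint Csum (F : nat -> C) (n : nat) : C :=
  match n with
  | O => F O
  | S k => Cplus (Csum F k) (F (S k))
  end.

Definition Bop (n : nat) (t alpha : nat -> R) (p : nat -> R -> C)
    (f : R -> R) (x : R) : C :=
  Csum (fun k => Cmult (RtoC (f (t k) * alpha k)) (p k x)) n.

(* Expand [exp (lam0 x) = sum c0_k p_k] and [exp (lam1 x) = sum c1_k p_k].  Since the
   [p_k] are linearly independent on [a, b], [B_n] fixes both exponentials iff
   [exp (lam0 t_k) alpha_k = c0_k] and [exp (lam1 t_k) alpha_k = c1_k], i.e. iff
   [exp ((lam1 - lam0) t_k) = c1_k / c0_k] and [alpha_k = c0_k exp (- lam0 t_k)]; this gives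
   uniqueness.  Existence needs [c0_k > 0] and [t_k] in [[a, b]]: evaluating at [a] and [b]
   shows that the ratios [r_k = c1_k / c0_k] run from [exp ((lam1 - lam0) a)] to
   [exp ((lam1 - lam0) b)], so it suffices that they increase.
   Both facts follow from one positivity principle: if [exp (mu x) = sum w_k q_k] for a
   non-negative system [q] with Bernstein zero orders, and the partial sums of
   [w_k (D - mu) q_k] have no zeros beyond those forced at [a] and [b], then all [w_k > 0].
   For [(mu, q) = (lam0, p)] the zero bound comes from the Chebyshev property of
   [E_(lam2, ..., lamn)] after applying [D - lam1] and Rolle; it gives [c0 > 0] and a new
   non-negative system [Q_j = - (D - lam0) sum_(k <= j) c0_k p_k] of order [n - 1], in
   which [exp (lam1 x)] has the coefficients [(r_(j+1) - r_j) / (lam1 - lam0)].  The second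
   application, to [(lam1, Q)], makes these positive. *)

From Stdlib Require Import Reals List Lra Lia Psatz FunctionalExtensionality Classical.
From Coquelicot Require Import Coquelicot.
Import ListNotations.
Open Scope R_scope.

(* Coquelicot's sums produce equations over [AbelianMonoid.sort R_AbelianMonoid],
   which [ring] and [lra] do not recognise as equations over [R]. *)
Ltac eq_R := match goal with |- @eq _ ?x ?y => change (x = y :> R) end.

Lemma sum_n_lin (u v : nat -> R) (al be : R) m :
  sum_n (fun k => al * u k + be * v k) m = al * sum_n u m + be * sum_n v m :> R.
Proof.
  induction m as [|m IH]. { rewrite !sum_O; auto. }
  rewrite !sum_Sn, IH. unfold plus; simpl. ring.
Qed.

Lemma sum_n_scal (u : nat -> R) al m : sum_n (fun k => al * u k) m = al * sum_n u m :> R.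
Proof.
  rewrite (sum_n_ext _ (fun k => al * u k + 0 * u k)) by (intros; eq_R; ring).
  rewrite sum_n_lin. ring.
Qed.

Lemma sum_n_minus (u v : nat -> R) m : sum_n (fun k => u k - v k) m = sum_n u m - sum_n v m :> R.
Proof.
  rewrite (sum_n_ext _ (fun k => 1 * u k + (-1) * v k)) by (intros; eq_R; ring).
  rewrite sum_n_lin. ring.
Qed.

Lemma sum_n_opp (u : nat -> R) m : sum_n (fun k => - u k) m = - sum_n u m :> R.
Proof.
  rewrite (sum_n_ext _ (fun k => (-1) * u k)) by (intros; eq_R; ring).
  rewrite sum_n_scal. ring.
Qed.

Lemma sum_n_zero (F : nat -> R) m : (forall k, (k <= m)%nat -> F k = 0) -> sum_n F m = 0 :> R.
Proof.
  intros H. rewrite (sum_n_ext_loc _ (fun k => 0 * F k)) by (intros; rewrite H; auto; eq_R; ring).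
  rewrite sum_n_scal. ring.
Qed.

Lemma sum_n_single (F : nat -> R) k m : (k <= m)%nat ->
  (forall i, (i <= m)%nat -> i <> k -> F i = 0) -> sum_n F m = F k :> R.
Proof.
  revert k; induction m as [|m IH]; intros k Hk H.
  - rewrite sum_O. now replace k with 0%nat by lia.
  - rewrite sum_Sn. unfold plus; simpl. destruct (Nat.eq_dec k (S m)) as [->|Hne].
    + rewrite sum_n_zero by (intros; apply H; lia). ring.
    + rewrite (IH k), (H (S m)) by (lia || intros; apply H; lia). ring.
Qed.

Lemma sum_n_split (F : nat -> R) j m : (j <= m)%nat ->
  sum_n F m = sum_n F j + sum_n_m F (S j) m :> R.
Proof. intros H. unfold sum_n. rewrite (sum_n_m_Chasles F 0 j m) by lia. reflexivity. Qed.

Lemma sum_n_m_single_first (F : nat -> R) j m : (S j <= m)%nat ->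
  (forall k, (S (S j) <= k <= m)%nat -> F k = 0) -> sum_n_m F (S j) m = F (S j) :> R.
Proof.
  intros Hj H. rewrite (sum_n_m_Chasles F (S j) (S j) m), sum_n_n by lia.
  rewrite (sum_n_m_ext_loc F (fun _ => zero)), sum_n_m_const_zero by (intros; apply H; auto).
  apply plus_zero_r.
Qed.

Lemma sum_n_pad (F : nat -> R) j m : (j <= m)%nat ->
  sum_n F j = sum_n (fun k => if Nat.leb k j then F k else 0) m :> R.
Proof.
  intros H. rewrite (sum_n_split _ j m H).
  rewrite (sum_n_m_ext_loc _ (fun _ => zero)), sum_n_m_const_zero.
  - rewrite Rplus_0_r. apply sum_n_ext_loc. intros k Hk. destruct (Nat.leb_spec k j); auto; lia.
  - intros k Hk. destruct (Nat.leb_spec k j); auto; lia.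
Qed.

Definition smooth (f : R -> R) : Prop := forall k x, ex_derive_n f k x.

Lemma locally_forall (P : R -> Prop) x : (forall y, P y) -> locally x P.
Proof. intros H. apply filter_forall. exact H. Qed.

Lemma smooth_ext f g : (forall x, f x = g x) -> smooth f -> smooth g.
Proof. intros H Hf k x. apply (ex_derive_n_ext f); auto. Qed.

Lemma smooth_ex_derive f x : smooth f -> ex_derive f x.
Proof. intros H. exact (H 1%nat x). Qed.

Lemma Derive_n_Derive f k x : Derive_n (Derive f) k x = Derive_n f (S k) x.
Proof. replace (S k) with (k + 1)%nat by lia. rewrite <- Derive_n_comp. reflexivity. Qed.

Lemma smooth_Derive f : smooth f -> smooth (Derive f).
Proof.
  intros H k x. destruct k as [|k]. { exact I. }
  apply ex_derive_ext with (f := Derive_n f (S k)).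
  - intros t. symmetry. apply Derive_n_Derive.
  - exact (H (S (S k)) x).
Qed.

Lemma smooth_plus f g : smooth f -> smooth g -> smooth (fun x => f x + g x).
Proof. intros Hf Hg k x. apply ex_derive_n_plus; apply locally_forall; auto. Qed.

Lemma smooth_minus f g : smooth f -> smooth g -> smooth (fun x => f x - g x).
Proof. intros Hf Hg k x. apply ex_derive_n_minus; apply locally_forall; auto. Qed.

Lemma smooth_opp f : smooth f -> smooth (fun x => - f x).
Proof. intros Hf k x. apply ex_derive_n_opp. apply Hf. Qed.

Lemma smooth_scal c f : smooth f -> smooth (fun x => c * f x).
Proof. intros Hf k x. apply ex_derive_n_scal_l; auto. Qed.

Lemma smooth_const c : smooth (fun _ => c).
Proof. intros k x. apply ex_derive_n_const. Qed.

Lemma smooth_sum_n (F : nat -> R -> R) m :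
  (forall k, (k <= m)%nat -> smooth (F k)) -> smooth (fun x => sum_n (fun k => F k x) m).
Proof. intros H k x. apply ex_derive_n_sum_n. apply locally_forall. intros; apply H; auto. Qed.

Lemma Derive_n_plus_smooth f g k x : smooth f -> smooth g ->
  Derive_n (fun x => f x + g x) k x = Derive_n f k x + Derive_n g k x.
Proof. intros Hf Hg. apply Derive_n_plus; apply locally_forall; auto. Qed.

Lemma Derive_n_minus_smooth f g k x : smooth f -> smooth g ->
  Derive_n (fun x => f x - g x) k x = Derive_n f k x - Derive_n g k x.
Proof. intros Hf Hg. apply Derive_n_minus; apply locally_forall; auto. Qed.

Lemma Derive_n_sum_n_smooth (F : nat -> R -> R) m i x :
  (forall k, (k <= m)%nat -> smooth (F k)) ->
  Derive_n (fun x => sum_n (fun k => F k x) m) i x = sum_n (fun k => Derive_n (F k) i x) m.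
Proof. intros H. apply Derive_n_sum_n. apply locally_forall. intros; apply H; auto. Qed.

Lemma Derive_n_exp_lin mu i x : Derive_n (fun y => exp (mu * y)) i x = mu ^ i * exp (mu * x).
Proof.
  revert x; induction i as [|i IH]; intros x; simpl. { ring. }
  rewrite (Derive_ext _ (fun y => mu ^ i * exp (mu * y))) by auto.
  apply is_derive_unique. auto_derive; auto. ring.
Qed.

Lemma smooth_exp_lin mu : smooth (fun y => exp (mu * y)).
Proof.
  intros k x. destruct k as [|k]. { exact I. }
  apply ex_derive_ext with (f := fun y => mu ^ k * exp (mu * y)).
  - intros. symmetry. apply Derive_n_exp_lin.
  - auto_derive. auto.
Qed.

Lemma smooth_derivable_pt_lim f x : smooth f -> derivable_pt_lim f x (Derive f x).
Proof. intros H. apply is_derive_Reals, Derive_correct, smooth_ex_derive, H. Qed.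

Lemma smooth_continuity_pt f x : smooth f -> continuity_pt f x.
Proof.
  intros H. apply derivable_continuous_pt. exists (Derive f x).
  apply smooth_derivable_pt_lim, H.
Qed.

Lemma interior_point_near_left a b d : a < b -> 0 < d -> exists x, a < x < b /\ x < a + d.
Proof.
  intros Hab Hd. exists (a + Rmin d (b - a) / 2).
  pose proof (Rmin_l d (b - a)). pose proof (Rmin_r d (b - a)).
  pose proof (Rmin_glb_lt d (b - a) 0 Hd ltac:(lra)). lra.
Qed.

Lemma interior_point_near_right a b d y : a < b -> 0 < d -> y < b ->
  exists x, a < x < b /\ b - d < x /\ y < x.
Proof.
  intros Hab Hd Hy.
  pose proof (Rmax_l (b - d) (Rmax a y)). pose proof (Rmax_r (b - d) (Rmax a y)).
  pose proof (Rmax_l a y). pose proof (Rmax_r a y).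
  assert (Rmax (b - d) (Rmax a y) < b) by (apply Rmax_lub_lt; [lra | apply Rmax_lub_lt; lra]).
  exists ((Rmax (b - d) (Rmax a y) + b) / 2). lra.
Qed.

Lemma step_within a b x d : a < b -> a <= x <= b -> 0 < d ->
  exists h, h <> 0 /\ Rabs h < d /\ a <= x + h <= b.
Proof.
  intros Hab Hx Hd. pose proof (Rmin_l (d / 2) (b - a)). pose proof (Rmin_r (d / 2) (b - a)).
  pose proof (Rmin_glb_lt (d / 2) (b - a) 0 ltac:(lra) ltac:(lra)).
  destruct (Rlt_or_le x b).
  - exists (Rmin (d / 2) (b - x)).
    pose proof (Rmin_l (d / 2) (b - x)). pose proof (Rmin_r (d / 2) (b - x)).
    pose proof (Rmin_glb_lt (d / 2) (b - x) 0 ltac:(lra) ltac:(lra)).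
    rewrite Rabs_pos_eq by lra. repeat split; lra.
  - exists (- Rmin (d / 2) (b - a)). rewrite Rabs_Ropp, Rabs_pos_eq by lra.
    repeat split; lra.
Qed.

(* At an endpoint only one-sided difference quotients stay in [a, b], which suffices. *)
Lemma Derive_vanishing_on (u : R -> R) a b x : a < b -> a <= x <= b -> ex_derive u x ->
  (forall y, a <= y <= b -> u y = 0) -> Derive u x = 0.
Proof.
  intros Hab Hx Hd H0.
  pose proof (proj1 (is_derive_Reals _ _ _) (Derive_correct _ _ Hd)) as Hlim.
  destruct (Req_dec (Derive u x) 0) as [E|E]; auto. exfalso.
  destruct (Hlim (Rabs (Derive u x)) ltac:(apply Rabs_pos_lt; auto)) as [d Hq].
  destruct (step_within a b x d Hab Hx (cond_pos d)) as [h [Hh [Hhd Hxh]]].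
  specialize (Hq h Hh Hhd). rewrite (H0 (x + h)), (H0 x) in Hq by auto.
  replace ((0 - 0) / h - Derive u x) with (- Derive u x) in Hq by (field; auto).
  rewrite Rabs_Ropp in Hq. lra.
Qed.

Lemma Derive_n_vanishing_on (u : R -> R) a b : a < b -> smooth u ->
  (forall y, a <= y <= b -> u y = 0) -> forall k x, a <= x <= b -> Derive_n u k x = 0.
Proof.
  intros Hab Hs H0 k. induction k as [|k IH]; intros x Hx; simpl; auto.
  apply (Derive_vanishing_on _ a b); auto. exact (Hs (S k) x).
Qed.

Lemma Derive_n_agree_on (u v : R -> R) a b : a < b -> smooth u -> smooth v ->
  (forall y, a <= y <= b -> u y = v y) -> forall k x, a <= x <= b -> Derive_n u k x = Derive_n v k x.
Proof.
  intros Hab Hu Hv H k x Hx.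
  assert (Derive_n (fun y => u y - v y) k x = 0) as E.
  { apply (Derive_n_vanishing_on _ a b); auto.
    - apply smooth_minus; auto.
    - intros y Hy. rewrite H; auto; ring. }
  rewrite Derive_n_minus_smooth in E; auto. lra.
Qed.

Definition flat_to (g : R -> R) (c : R) (m : nat) : Prop :=
  forall i, (i < m)%nat -> Derive_n g i c = 0.

Lemma flat_to_value g c m : flat_to g c m -> (1 <= m)%nat -> g c = 0.
Proof. intros H Hm. apply (H 0%nat). lia. Qed.

Lemma pos_right_of_flat (g : R -> R) a j : smooth g -> flat_to g a j -> Derive_n g j a > 0 ->
  exists d, d > 0 /\ forall x, a < x < a + d -> g x > 0.
Proof.
  revert g. induction j as [|j IH]; intros g Hs Hz Hp; simpl in Hp.
  - destruct (smooth_continuity_pt g a Hs (g a) Hp) as [d [Hd Hnear]].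
    exists d; split; auto. intros x Hx.
    assert (R_dist (g x) (g a) < g a) as Hgx.
    { apply Hnear. split.
      - split; [exact I | lra].
      - simpl. unfold R_dist. rewrite Rabs_pos_eq; lra. }
    apply Rabs_lt_between in Hgx. lra.
  - destruct (IH (Derive g)) as [d [Hd Hpos]].
    + apply smooth_Derive, Hs.
    + intros i Hi. rewrite Derive_n_Derive. apply Hz. lia.
    + rewrite Derive_n_Derive. exact Hp.
    + exists d; split; auto. intros x Hx.
      destruct (MVT_cor2 g (Derive g) a x) as [c [Hc Hcx]]; [lra | |].
      { intros; apply smooth_derivable_pt_lim, Hs. }
      pose proof (Hpos c ltac:(lra)). rewrite (flat_to_value g a (S j)) in Hc by (auto; lia).
      nra.
Qed.

Lemma pos_left_of_flat (g : R -> R) b j : smooth g -> flat_to g b j ->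
  (-1) ^ j * Derive_n g j b > 0 -> exists d, d > 0 /\ forall x, b - d < x < b -> g x > 0.
Proof.
  intros Hs Hz Hp. set (h := fun y => g (- y)).
  assert (Hh : forall i x, Derive_n h i x = (-1) ^ i * Derive_n g i (- x)).
  { intros. apply Derive_n_comp_opp. apply locally_forall. intros; apply Hs. }
  destruct (pos_right_of_flat h (- b) j) as [d [Hd Hpos]].
  - intros k x. apply ex_derive_n_comp_opp. apply locally_forall. intros; apply Hs.
  - intros i Hi. rewrite Hh, Ropp_involutive, Hz; auto. ring.
  - rewrite Hh, Ropp_involutive. exact Hp.
  - exists d; split; auto. intros x Hx. specialize (Hpos (- x) ltac:(lra)).
    unfold h in Hpos. rewrite Ropp_involutive in Hpos. exact Hpos.
Qed.

Lemma nonneg_leading_Derive_n_left (q : R -> R) a b k : a < b -> smooth q ->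
  (forall x, a <= x <= b -> 0 <= q x) -> flat_to q a k -> Derive_n q k a <> 0 ->
  Derive_n q k a > 0.
Proof.
  intros Hab Hs Hn Hz Hk.
  destruct (Rlt_or_le 0 (Derive_n q k a)) as [H|H]; auto. exfalso.
  destruct (pos_right_of_flat (fun x => - q x) a k) as [d [Hd Hneg]].
  - apply smooth_opp, Hs.
  - intros i Hi. rewrite Derive_n_opp, Hz; auto. ring.
  - rewrite Derive_n_opp. lra.
  - destruct (interior_point_near_left a b d Hab Hd) as [x [Hx Hxd]].
    specialize (Hneg x ltac:(lra)). specialize (Hn x ltac:(lra)). lra.
Qed.

Lemma nonneg_leading_Derive_n_right (q : R -> R) a b k : a < b -> smooth q ->
  (forall x, a <= x <= b -> 0 <= q x) -> flat_to q b k -> Derive_n q k b <> 0 ->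
  (-1) ^ k * Derive_n q k b > 0.
Proof.
  intros Hab Hs Hn Hz Hk.
  assert ((-1) ^ k * Derive_n q k b <> 0).
  { apply Rmult_integral_contrapositive. split; auto. apply pow_nonzero. lra. }
  destruct (Rlt_or_le 0 ((-1) ^ k * Derive_n q k b)) as [H1|H1]; auto. exfalso.
  destruct (pos_left_of_flat (fun x => - q x) b k) as [d [Hd Hneg]].
  - apply smooth_opp, Hs.
  - intros i Hi. rewrite Derive_n_opp, Hz; auto. ring.
  - rewrite Derive_n_opp. lra.
  - destruct (interior_point_near_right a b d a Hab Hd Hab) as [x [Hx [Hxd _]]].
    specialize (Hneg x ltac:(lra)). specialize (Hn x ltac:(lra)). lra.
Qed.

Definition Dsub (mu : R) (f : R -> R) : R -> R := fun x => Derive f x - mu * f x.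

Lemma smooth_Dsub mu f : smooth f -> smooth (Dsub mu f).
Proof. intros H. apply smooth_minus; [apply smooth_Derive | apply smooth_scal]; exact H. Qed.

Lemma Derive_n_Dsub mu f i x : smooth f ->
  Derive_n (Dsub mu f) i x = Derive_n f (S i) x - mu * Derive_n f i x.
Proof.
  intros H. unfold Dsub. rewrite Derive_n_minus_smooth, Derive_n_Derive, Derive_n_scal_l; auto.
  - apply smooth_Derive, H.
  - apply smooth_scal, H.
Qed.

Lemma flat_to_Dsub mu g c m : smooth g -> flat_to g c (S m) -> flat_to (Dsub mu g) c m.
Proof. intros Hs H i Hi. rewrite Derive_n_Dsub, !H by (auto; lia). ring. Qed.

Lemma Dsub_sum_n mu (h : nat -> R -> R) (w : nat -> R) m x :
  (forall k, (k <= m)%nat -> smooth (h k)) ->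
  Dsub mu (fun y => sum_n (fun k => w k * h k y) m) x = sum_n (fun k => w k * Dsub mu (h k) x) m.
Proof.
  intros Hs. unfold Dsub.
  change (Derive ?f x) with (Derive_n f 1 x).
  rewrite Derive_n_sum_n_smooth by (intros; apply smooth_scal; auto).
  rewrite <- sum_n_scal, <- sum_n_minus. apply sum_n_ext. intros k. simpl.
  rewrite Derive_scal. change (Derive (fun y => h k y) x) with (Derive (h k) x). eq_R. ring.
Qed.

Lemma Dsub_exp_lin mu lam x : Dsub mu (fun y => exp (lam * y)) x = (lam - mu) * exp (lam * x).
Proof.
  unfold Dsub. rewrite (is_derive_unique _ _ (lam * exp (lam * x))); [ring |].
  auto_derive; auto. ring.
Qed.

Lemma is_derive_integrating_factor mu G c : smooth G ->
  derivable_pt_lim (fun t => exp (- mu * t) * G t) c (exp (- mu * c) * Dsub mu G c).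
Proof.
  intros Hs. apply is_derive_Reals. unfold Dsub.
  pose proof (Derive_correct G c (smooth_ex_derive G c Hs)) as HG.
  assert (He : is_derive (fun t => exp (- mu * t)) c (- mu * exp (- mu * c))).
  { auto_derive; auto. ring. }
  pose proof (is_derive_mult _ _ c _ _ He HG ltac:(intros; apply Rmult_comm)) as HM.
  unfold plus, mult in HM; simpl in HM.
  replace (exp (- mu * c) * (Derive G c - mu * G c))
    with (- mu * exp (- mu * c) * G c + exp (- mu * c) * Derive G c) by ring.
  exact HM.
Qed.

Lemma Rolle_Dsub mu G x y : smooth G -> x < y -> G x = 0 -> G y = 0 ->
  exists c, x < c < y /\ Dsub mu G c = 0.
Proof.
  intros Hs Hxy Hx Hy.
  destruct (MVT_cor2 (fun t => exp (- mu * t) * G t) (fun t => exp (- mu * t) * Dsub mu G t) x y Hxy)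
    as [c [Hc Hcxy]].
  { intros; apply is_derive_integrating_factor, Hs. }
  exists c; split; auto. rewrite Hx, Hy in Hc.
  pose proof (exp_pos (- mu * c)).
  assert (exp (- mu * c) * Dsub mu G c = 0) as E.
  { apply Rmult_eq_reg_r with (y - x); lra. }
  apply Rmult_integral in E. lra.
Qed.

Lemma Dsub_kernel_on mu G a b : smooth G -> (forall x, a <= x <= b -> Dsub mu G x = 0) ->
  forall x, a <= x <= b -> exp (- mu * x) * G x = exp (- mu * a) * G a.
Proof.
  intros Hs H x Hx. destruct (Req_dec x a) as [->|E]; auto.
  destruct (MVT_cor2 (fun t => exp (- mu * t) * G t) (fun t => exp (- mu * t) * Dsub mu G t) a x)
    as [c [Hc Hcx]]; [lra | |].
  { intros; apply is_derive_integrating_factor, Hs. }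
  rewrite H in Hc by lra. lra.
Qed.

Fixpoint chain (lo : R) (zs : list R) (hi : R) : Prop :=
  match zs with
  | nil => lo < hi
  | z :: zs' => lo < z /\ chain z zs' hi
  end.

Lemma chain_lo lo lo' zs hi : lo' <= lo -> chain lo zs hi -> chain lo' zs hi.
Proof. destruct zs; simpl; intros H1 H2; [lra |]. destruct H2; split; auto. lra. Qed.

Lemma chain_hi lo zs hi hi' : hi <= hi' -> chain lo zs hi -> chain lo zs hi'.
Proof. revert lo; induction zs; simpl; intros lo H1 H2; [lra |]. destruct H2; split; auto. Qed.

Lemma chain_lt lo zs hi : chain lo zs hi -> lo < hi.
Proof.
  revert lo; induction zs as [|z zs IH]; simpl; intros lo H; auto.
  destruct H as [H1 H2]. specialize (IH _ H2). lra.
Qed.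

Lemma chain_in lo zs hi z : chain lo zs hi -> In z zs -> lo < z < hi.
Proof.
  revert lo; induction zs as [|y zs IH]; simpl; intros lo H Hz; [contradiction |].
  destruct H as [H1 H2]. destruct Hz as [<-|Hz].
  - split; auto. eapply chain_lt; eauto.
  - specialize (IH _ H2 Hz). lra.
Qed.

Lemma chain_app lo zs z hi : chain lo (zs ++ [z]) hi -> chain lo zs z /\ z < hi.
Proof.
  revert lo; induction zs as [|y zs IH]; simpl; intros lo H; auto.
  destruct H as [H1 H2]. apply IH in H2. tauto.
Qed.

Lemma chain_NoDup lo zs hi : chain lo zs hi -> NoDup zs.
Proof.
  revert lo; induction zs as [|z zs IH]; simpl; intros lo H; constructor.
  - intros Hz. pose proof (chain_in _ _ _ _ (proj2 H) Hz). lra.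
  - eapply IH, H.
Qed.

Lemma Rolle_Dsub_chain mu G : smooth G -> forall zs x y, G x = 0 ->
  (forall z, In z zs -> G z = 0) -> chain x zs y -> G y = 0 ->
  exists zs', length zs' = S (length zs) /\ chain x zs' y /\ forall c, In c zs' -> Dsub mu G c = 0.
Proof.
  intros Hs zs. induction zs as [|z zs IH]; intros x y Hx Hz Hc Hy; simpl in *.
  - destruct (Rolle_Dsub mu G x y) as [c [Hc1 Hc2]]; auto.
    exists [c]. simpl. split; auto. split; [lra |]. intros c' [<-|[]]; auto.
  - destruct Hc as [Hxz Hc].
    destruct (Rolle_Dsub mu G x z) as [c [Hc1 Hc2]]; auto.
    destruct (IH z y) as [zs' [H1 [H2 H3]]]; auto.
    exists (c :: zs'). simpl. split; auto. split.
    + split; [lra |]. apply chain_lo with z; auto. lra.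
    + intros c' [<-|E]; auto.
Qed.

(* Endpoint zeros are counted with multiplicity, interior zeros only once: this weaker
   count is all that the Chebyshev hypothesis has to bound. *)
Definition zero_count_le (a b : R) (G : R -> R) (K : nat) : Prop :=
  (exists x, a <= x <= b /\ G x <> 0) ->
  forall al be zs, flat_to G a al -> flat_to G b be -> chain a zs b ->
  (forall z, In z zs -> G z = 0) -> (al + be + length zs <= K)%nat.

Lemma zero_count_le_ext a b G H K : (forall x, G x = H x) ->
  zero_count_le a b G K -> zero_count_le a b H K.
Proof.
  intros E HG [x [Hx Hn]] al be zs Ha Hb Hc Hz. apply HG; auto.
  - exists x. rewrite E. auto.
  - intros i Hi. rewrite (Derive_n_ext G H) by auto. apply Ha; auto.
  - intros i Hi. rewrite (Derive_n_ext G H) by auto. apply Hb; auto.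
  - intros z Hz'. rewrite E. auto.
Qed.

Lemma zero_count_le_Dsub_kernel mu a b G : a < b -> smooth G ->
  (forall x, a <= x <= b -> Dsub mu G x = 0) -> zero_count_le a b G 0.
Proof.
  intros Hab Hs HT [x0 [Hx0 Hgx0]] al be zs Ha Hb Hc Hz.
  pose proof (Dsub_kernel_on mu G a b Hs HT) as Hconst.
  assert (Hall : forall x, a <= x <= b -> G x <> 0).
  { intros x Hx E. apply Hgx0.
    pose proof (Hconst x Hx) as Ex. pose proof (Hconst x0 Hx0) as Ex0.
    rewrite E, Rmult_0_r in Ex. rewrite <- Ex in Ex0.
    pose proof (exp_pos (- mu * x0)). nra. }
  destruct al. 2: { exfalso. apply (Hall a); [lra |]. apply (flat_to_value _ _ _ Ha). lia. }
  destruct be. 2: { exfalso. apply (Hall b); [lra |]. apply (flat_to_value _ _ _ Hb). lia. }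
  destruct zs as [|z zs]; simpl; [lia |].
  exfalso. pose proof (chain_in _ _ _ z Hc (or_introl eq_refl)).
  apply (Hall z); [lra |]. apply Hz. left; auto.
Qed.

(* Rolle: between consecutive zeros of [G] (interior ones, or endpoints where [G]
   vanishes) there is a zero of [Dsub mu G], and each endpoint zero loses one order. *)
Section Rolle_count.
Variables (mu a b : R) (G : R -> R) (K : nat).
Hypothesis Hs : smooth G.
Hypothesis HK : forall al be zs, flat_to (Dsub mu G) a al -> flat_to (Dsub mu G) b be ->
  chain a zs b -> (forall z, In z zs -> Dsub mu G z = 0) -> (al + be + length zs <= K)%nat.

Lemma zeros_app_last zs y : (forall z, In z (zs ++ [y]) -> G z = 0) ->
  (forall z, In z zs -> G z = 0) /\ G y = 0.
Proof. intros Hz. split; intros; apply Hz, in_or_app; simpl; auto. Qed.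

Lemma Rolle_count_anchored al be zs : flat_to G a (S al) -> flat_to G b be -> chain a zs b ->
  (forall z, In z zs -> G z = 0) -> (S al + be + length zs <= S K)%nat.
Proof.
  intros Ha Hb Hc Hz. pose proof (flat_to_Dsub mu G a al Hs Ha) as HaT.
  destruct be as [|be].
  - destruct zs as [|y l _] using rev_ind.
    + specialize (HK al 0%nat [] HaT ltac:(intros i Hi; lia) Hc ltac:(simpl; tauto)). simpl in *. lia.
    + apply chain_app in Hc as [Hc Hyb]. destruct (zeros_app_last l y Hz) as [Hl Hy].
      destruct (Rolle_Dsub_chain mu G Hs l a y) as [zs' [Hlen [Hc' Hz']]]; auto.
      { apply (flat_to_value _ _ _ Ha). lia. }
      specialize (HK al 0%nat zs' HaT ltac:(intros i Hi; lia)
        ltac:(apply chain_hi with y; auto; lra) Hz').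
      rewrite length_app. simpl in *. lia.
  - destruct (Rolle_Dsub_chain mu G Hs zs a b) as [zs' [Hlen [Hc' Hz']]]; auto.
    { apply (flat_to_value _ _ _ Ha). lia. }
    { apply (flat_to_value _ _ _ Hb). lia. }
    specialize (HK al be zs' HaT (flat_to_Dsub mu G b be Hs Hb) Hc' Hz'). lia.
Qed.

Lemma Rolle_count_free be zs : flat_to G b be -> chain a zs b ->
  (forall z, In z zs -> G z = 0) -> (be + length zs <= S K)%nat.
Proof.
  intros Hb Hc Hz. destruct be as [|be].
  - destruct zs as [|z zs]; simpl; [lia |].
    destruct zs as [|y l _] using rev_ind; simpl; [lia |].
    destruct Hc as [Haz Hc]. apply chain_app in Hc as [Hc Hyb].
    destruct (zeros_app_last (z :: l) y Hz) as [Hl Hy].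
    destruct (Rolle_Dsub_chain mu G Hs l z y) as [zs' [Hlen [Hc' Hz']]]; auto.
    { apply Hl; simpl; auto. }
    { intros w Hw; apply Hl; simpl; auto. }
    specialize (HK 0%nat 0%nat zs' ltac:(intros i Hi; lia) ltac:(intros i Hi; lia)
      ltac:(apply chain_lo with z; [lra |]; apply chain_hi with y; auto; lra) Hz').
    rewrite length_app. simpl in *. lia.
  - pose proof (flat_to_Dsub mu G b be Hs Hb) as HbT.
    destruct zs as [|z zs].
    + specialize (HK 0%nat be [] ltac:(intros i Hi; lia) HbT Hc ltac:(simpl; tauto)). simpl in *. lia.
    + destruct Hc as [Haz Hc].
      destruct (Rolle_Dsub_chain mu G Hs zs z b) as [zs' [Hlen [Hc' Hz']]]; auto.
      { apply Hz; simpl; auto. }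
      { intros w Hw; apply Hz; simpl; auto. }
      { apply (flat_to_value _ _ _ Hb). lia. }
      specialize (HK 0%nat be zs' ltac:(intros i Hi; lia) HbT
        ltac:(apply chain_lo with z; auto; lra) Hz'). simpl in *. lia.
Qed.

End Rolle_count.

Lemma zero_count_le_Dsub mu a b G K : a < b -> smooth G ->
  zero_count_le a b (Dsub mu G) K -> zero_count_le a b G (S K).
Proof.
  intros Hab Hs HB Hnz al be zs Ha Hb Hc Hz.
  destruct (classic (exists x, a <= x <= b /\ Dsub mu G x <> 0)) as [HnzT|HT].
  - destruct al as [|al].
    + exact (Rolle_count_free mu a b G K Hs (HB HnzT) be zs Hb Hc Hz).
    + exact (Rolle_count_anchored mu a b G K Hs (HB HnzT) al be zs Ha Hb Hc Hz).
  - assert (zero_count_le a b G 0) as H0.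
    { apply (zero_count_le_Dsub_kernel mu); auto. intros x Hx.
      apply NNPP. intros Hne. apply HT. eauto. }
    specialize (H0 Hnz al be zs Ha Hb Hc Hz). lia.
Qed.

Definition Dsub_partial (q : nat -> R -> R) (mu : R) (w : nat -> R) (j : nat) : R -> R :=
  fun x => sum_n (fun k => w k * Dsub mu (q k) x) j.

Lemma Dsub_partial_Dsub q mu w j x : (forall k, (k <= j)%nat -> smooth (q k)) ->
  Dsub_partial q mu w j x = Dsub mu (fun y => sum_n (fun k => w k * q k y) j) x.
Proof. intros Hs. unfold Dsub_partial. rewrite Dsub_sum_n; auto. Qed.

Lemma smooth_Dsub_partial q mu w j : (forall k, (k <= j)%nat -> smooth (q k)) ->
  smooth (Dsub_partial q mu w j).
Proof. intros H. apply smooth_sum_n. intros k Hk. apply smooth_scal, smooth_Dsub; auto. Qed.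

Lemma Derive_n_Dsub_partial q mu w j i x : (forall k, (k <= j)%nat -> smooth (q k)) ->
  Derive_n (Dsub_partial q mu w j) i x =
  sum_n (fun k => w k * (Derive_n (q k) (S i) x - mu * Derive_n (q k) i x)) j.
Proof.
  intros H. unfold Dsub_partial. rewrite Derive_n_sum_n_smooth.
  - apply sum_n_ext_loc. intros k Hk. rewrite Derive_n_scal_l, Derive_n_Dsub; auto.
  - intros k Hk. apply smooth_scal, smooth_Dsub; auto.
Qed.

(* The full sum [exp (mu x)] is killed by [Dsub mu], so the partial sums of
   [w k * Dsub mu (q k)] inherit from the Bernstein orders a zero of order [j] at [a]
   and of order [N - 1 - j] at [b].  Once the zero count of these partial sums is
   bounded by [N - 1] they have no further zeros, hence a constant sign, and this
   sign propagates the positivity of [w j] to [w (S j)]. *)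
Section Positive_coefficients.
Variables (a b mu : R) (N : nat) (q : nat -> R -> R) (w : nat -> R).
Hypothesis Hab : a < b.
Hypothesis Hsmooth : forall k, (k <= N)%nat -> smooth (q k).
Hypothesis Hnonneg : forall k x, (k <= N)%nat -> a <= x <= b -> 0 <= q k x.
Hypothesis Hord_a : forall k, (k <= N)%nat -> flat_to (q k) a k /\ Derive_n (q k) k a <> 0.
Hypothesis Hord_b : forall k, (k <= N)%nat ->
  flat_to (q k) b (N - k) /\ Derive_n (q k) (N - k) b <> 0.
Hypothesis Hexp : forall x, a <= x <= b -> exp (mu * x) = sum_n (fun k => w k * q k x) N.

Let g := Dsub_partial q mu w.

Lemma smooth_Dsub_partial_le j : (j <= N)%nat -> smooth (g j).
Proof. intros Hj. apply smooth_Dsub_partial. intros; apply Hsmooth; lia. Qed.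

Lemma Dsub_expansion_zero i x : a <= x <= b ->
  sum_n (fun k => w k * (Derive_n (q k) (S i) x - mu * Derive_n (q k) i x)) N = 0 :> R.
Proof.
  intros Hx.
  assert (Hd : forall m, sum_n (fun k => w k * Derive_n (q k) m x) N = mu ^ m * exp (mu * x) :> R).
  { intros m. rewrite <- Derive_n_exp_lin.
    rewrite (Derive_n_agree_on (fun y => exp (mu * y)) (fun y => sum_n (fun k => w k * q k y) N) a b);
      auto.
    - rewrite Derive_n_sum_n_smooth by (intros; apply smooth_scal, Hsmooth; auto).
      apply sum_n_ext. intros. symmetry. apply Derive_n_scal_l.
    - apply smooth_exp_lin.
    - apply smooth_sum_n. intros; apply smooth_scal, Hsmooth; auto. }
  rewrite (sum_n_ext _ (fun k => w k * Derive_n (q k) (S i) x - mu * (w k * Derive_n (q k) i x)))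
    by (intros; eq_R; ring).
  rewrite sum_n_minus, sum_n_scal, !Hd. simpl. ring.
Qed.

Lemma Dsub_partial_flat_a j : (j < N)%nat ->
  flat_to (g j) a j /\ Derive_n (g j) j a = - (w (S j) * Derive_n (q (S j)) (S j) a).
Proof.
  intros Hj.
  assert (Htail : forall i, Derive_n (g j) i a =
     - sum_n_m (fun k => w k * (Derive_n (q k) (S i) a - mu * Derive_n (q k) i a)) (S j) N).
  { intros i. unfold g. rewrite Derive_n_Dsub_partial by (intros; apply Hsmooth; lia).
    pose proof (Dsub_expansion_zero i a ltac:(lra)) as E.
    rewrite (sum_n_split _ j N) in E by lia. lra. }
  assert (Hlow : forall k i, (S j <= k <= N)%nat -> (S i < k)%nat ->
     w k * (Derive_n (q k) (S i) a - mu * Derive_n (q k) i a) = 0).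
  { intros k i Hk Hi. destruct (Hord_a k ltac:(lia)) as [Hf _]. rewrite !Hf by lia. ring. }
  split.
  - intros i Hi. rewrite Htail.
    rewrite (sum_n_m_ext_loc _ (fun _ => zero)), sum_n_m_const_zero
      by (intros; apply Hlow; lia). apply Ropp_0.
  - rewrite Htail, sum_n_m_single_first by (auto; intros; apply Hlow; lia).
    destruct (Hord_a (S j) ltac:(lia)) as [Hf _]. rewrite (Hf j) by lia. ring.
Qed.

Lemma Dsub_partial_flat_b j : (j < N)%nat ->
  flat_to (g j) b (N - 1 - j) /\ Derive_n (g j) (N - 1 - j) b = w j * Derive_n (q j) (N - j) b.
Proof.
  intros Hj.
  assert (Hlow : forall k i, (k <= j)%nat -> (S i < N - k)%nat ->
     w k * (Derive_n (q k) (S i) b - mu * Derive_n (q k) i b) = 0).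
  { intros k i Hk Hi. destruct (Hord_b k ltac:(lia)) as [Hf _]. rewrite !Hf by lia. ring. }
  unfold g. split.
  - intros i Hi. rewrite Derive_n_Dsub_partial by (intros; apply Hsmooth; lia).
    apply sum_n_zero. intros k Hk. apply Hlow; lia.
  - rewrite Derive_n_Dsub_partial by (intros; apply Hsmooth; lia).
    rewrite (sum_n_single _ j) by (auto; intros; apply Hlow; lia).
    destruct (Hord_b j ltac:(lia)) as [Hf _]. rewrite (Hf (N - 1 - j)%nat) by lia.
    replace (S (N - 1 - j)) with (N - j)%nat by lia. ring.
Qed.

Lemma Dsub_partial_sign_b j : (j < N)%nat -> w j > 0 ->
  (-1) ^ (N - 1 - j) * Derive_n (g j) (N - 1 - j) b < 0.
Proof.
  intros Hj Hw. rewrite (proj2 (Dsub_partial_flat_b j Hj)).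
  destruct (Hord_b j ltac:(lia)) as [Hz Hnz].
  pose proof (nonneg_leading_Derive_n_right (q j) a b (N - j) Hab (Hsmooth j ltac:(lia))
    (fun x => Hnonneg j x ltac:(lia)) Hz Hnz) as Hpos.
  replace (N - j)%nat with (S (N - 1 - j)) in * by lia.
  rewrite <- tech_pow_Rmult in Hpos.
  replace ((-1) ^ (N - 1 - j) * (w j * Derive_n (q j) (S (N - 1 - j)) b))
    with (- (w j * (-1 * (-1) ^ (N - 1 - j) * Derive_n (q j) (S (N - 1 - j)) b))) by ring.
  pose proof (Rmult_lt_0_compat _ _ Hw Hpos). lra.
Qed.

Hypothesis Hcount : forall j, (j < N)%nat -> zero_count_le a b (g j) (N - 1).

Lemma Dsub_partial_not_vanishing j : (j < N)%nat -> w j > 0 -> exists x, a <= x <= b /\ g j x <> 0.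
Proof.
  intros Hj Hw. apply NNPP. intros Hn.
  assert (forall y, a <= y <= b -> g j y = 0) as H0.
  { intros y Hy. apply NNPP. intros Hne. apply Hn. eauto. }
  pose proof (Dsub_partial_sign_b j Hj Hw) as Hs.
  rewrite (Derive_n_vanishing_on _ a b Hab (smooth_Dsub_partial_le j ltac:(lia)) H0) in Hs by lra. lra.
Qed.

Lemma Dsub_partial_no_interior_zero j : (j < N)%nat -> w j > 0 -> forall z, a < z < b -> g j z <> 0.
Proof.
  intros Hj Hw z Hz E.
  pose proof (Hcount j Hj (Dsub_partial_not_vanishing j Hj Hw) j (N - 1 - j)%nat [z]
    (proj1 (Dsub_partial_flat_a j Hj)) (proj1 (Dsub_partial_flat_b j Hj)) ltac:(simpl; lra)
    ltac:(intros z' [<-|[]]; auto)).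
  simpl in *. lia.
Qed.

Lemma Dsub_partial_neg_near_b j : (j < N)%nat -> w j > 0 ->
  exists d, d > 0 /\ forall x, b - d < x < b -> g j x < 0.
Proof.
  intros Hj Hw.
  destruct (pos_left_of_flat (fun x => - g j x) b (N - 1 - j)) as [d [Hd Hneg]].
  - apply smooth_opp, smooth_Dsub_partial_le. lia.
  - intros i Hi. rewrite Derive_n_opp, (proj1 (Dsub_partial_flat_b j Hj)); auto. ring.
  - rewrite Derive_n_opp. pose proof (Dsub_partial_sign_b j Hj Hw). lra.
  - exists d. split; auto. intros x Hx. specialize (Hneg x Hx). lra.
Qed.

Lemma Dsub_partial_no_sign_change j x y : (j < N)%nat -> w j > 0 -> a <= x -> y < b -> x < y ->
  g j x > 0 -> g j y < 0 -> False.
Proof.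
  intros Hj Hw Hx Hy Hxy Hgx Hgy.
  destruct (IVT (fun t => - g j t) x y) as [z [Hz Hgz]]; auto; try lra.
  { intros t. apply continuity_pt_opp, smooth_continuity_pt, smooth_Dsub_partial_le. lia. }
  assert (z <> x) by (intros ->; lra). assert (z <> y) by (intros ->; lra).
  apply (Dsub_partial_no_interior_zero j Hj Hw z); lra.
Qed.

Lemma first_coefficient_pos : w 0%nat > 0.
Proof.
  pose proof (Hexp a ltac:(lra)) as E.
  destruct (Hord_a 0%nat ltac:(lia)) as [Hz Hnz].
  rewrite (sum_n_single _ 0) in E; [| lia |].
  - pose proof (nonneg_leading_Derive_n_left (q 0%nat) a b 0 Hab (Hsmooth 0%nat ltac:(lia))
      (fun x => Hnonneg 0%nat x ltac:(lia)) Hz Hnz).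
    pose proof (exp_pos (mu * a)). simpl in *. nra.
  - intros k Hk Hk0. pose proof (proj1 (Hord_a k Hk) 0%nat ltac:(lia)) as H0.
    simpl in H0. rewrite H0. ring.
Qed.

Lemma next_coefficient_pos k : (k < N)%nat -> w k > 0 -> w (S k) > 0.
Proof.
  intros Hk Hw.
  destruct (Hord_a (S k) ltac:(lia)) as [Hz Hnz].
  pose proof (nonneg_leading_Derive_n_left (q (S k)) a b (S k) Hab (Hsmooth (S k) ltac:(lia))
    (fun x => Hnonneg (S k) x ltac:(lia)) Hz Hnz) as Hpos.
  destruct (Dsub_partial_flat_a k Hk) as [Hfa Ea].
  destruct (Rlt_or_le 0 (w (S k))) as [Hp|Hp]; auto. exfalso.
  destruct (Req_dec (w (S k)) 0) as [E0|E0].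
  - assert (flat_to (g k) a (S k)) as Hfa'.
    { intros i Hi. destruct (Nat.eq_dec i k) as [->|]; [rewrite Ea, E0; ring | apply Hfa; lia]. }
    pose proof (Hcount k Hk (Dsub_partial_not_vanishing k Hk Hw) (S k) (N - 1 - k)%nat []
      Hfa' (proj1 (Dsub_partial_flat_b k Hk)) ltac:(simpl; lra) ltac:(simpl; tauto)).
    simpl in *. lia.
  - destruct (pos_right_of_flat (g k) a k (smooth_Dsub_partial_le k ltac:(lia)) Hfa) as [d1 [Hd1 Hpos1]].
    { rewrite Ea. nra. }
    destruct (Dsub_partial_neg_near_b k Hk Hw) as [d2 [Hd2 Hneg2]].
    destruct (interior_point_near_left a b d1 Hab Hd1) as [x1 [Hx1 Hx1d]].
    destruct (interior_point_near_right a b d2 x1 Hab Hd2 ltac:(lra)) as [x2 [Hx2 [Hx2d Hx12]]].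
    apply (Dsub_partial_no_sign_change k x1 x2 Hk Hw); try lra.
    + apply Hpos1. lra.
    + apply Hneg2. lra.
Qed.

Theorem expansion_coefficients_pos k : (k <= N)%nat -> w k > 0.
Proof.
  induction k as [|k IH]; intros Hk.
  - apply first_coefficient_pos.
  - apply next_coefficient_pos; [lia | apply IH; lia].
Qed.

Theorem Dsub_partial_nonpos j : (j < N)%nat -> forall x, a <= x <= b -> g j x <= 0.
Proof.
  intros Hj x Hx. assert (Hw : w j > 0) by (apply expansion_coefficients_pos; lia).
  destruct (Rle_or_lt (g j x) 0) as [H|H]; auto. exfalso.
  destruct (Req_dec x b) as [->|Eb].
  - pose proof (Dsub_partial_sign_b j Hj Hw) as Hs.
    destruct (N - 1 - j)%nat eqn:E; [simpl in Hs; lra |].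
    rewrite (flat_to_value _ _ _ (proj1 (Dsub_partial_flat_b j Hj))) in H by (rewrite E; lia). lra.
  - destruct (Dsub_partial_neg_near_b j Hj Hw) as [d2 [Hd2 Hneg2]].
    destruct (interior_point_near_right a b d2 x Hab Hd2 ltac:(lra)) as [x2 [Hx2 [Hx2d Hx12]]].
    apply (Dsub_partial_no_sign_change j x x2 Hj Hw); try lra. apply Hneg2. lra.
Qed.

End Positive_coefficients.

Lemma C_ext (z w : C) : Re z = Re w -> Im z = Im w -> z = w.
Proof. destruct z, w. unfold Re, Im. simpl. intros -> ->. reflexivity. Qed.

Ltac Csimpl := unfold CDn, Cminus, Cplus, Copp, Cmult, RtoC, Re, Im in *; simpl in *.

Lemma Csmooth_iff f : Csmooth f <-> smooth (fun t => Re (f t)) /\ smooth (fun t => Im (f t)).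
Proof.
  split.
  - intros H. split; intros k x; apply H.
  - intros [H1 H2] k x. split; [apply H1 | apply H2].
Qed.

Lemma Csmooth_plus f g : Csmooth f -> Csmooth g -> Csmooth (fun y => Cplus (f y) (g y)).
Proof.
  rewrite !Csmooth_iff. intros [Hf1 Hf2] [Hg1 Hg2]. split; apply smooth_plus; auto.
Qed.

Lemma Csmooth_scal c f : Csmooth f -> Csmooth (fun y => Cmult c (f y)).
Proof.
  rewrite !Csmooth_iff. intros [H1 H2]. Csimpl. split.
  - apply smooth_minus; apply smooth_scal; auto.
  - apply smooth_plus; apply smooth_scal; auto.
Qed.

Lemma Csmooth_Csum (F : nat -> R -> C) m : (forall k, (k <= m)%nat -> Csmooth (F k)) ->
  Csmooth (fun y => Csum (fun k => F k y) m).
Proof. intros H. induction m; simpl; auto. apply Csmooth_plus; auto. Qed.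

Lemma Re_Csum (F : nat -> C) m : Re (Csum F m) = sum_n (fun k => Re (F k)) m.
Proof. induction m as [|m IH]; simpl. { rewrite sum_O; auto. } rewrite sum_Sn, <- IH. reflexivity. Qed.

Lemma Im_Csum (F : nat -> C) m : Im (Csum F m) = sum_n (fun k => Im (F k)) m.
Proof. induction m as [|m IH]; simpl. { rewrite sum_O; auto. } rewrite sum_Sn, <- IH. reflexivity. Qed.

Lemma Csum_zero (F : nat -> C) m : (forall k, (k <= m)%nat -> F k = 0) -> Csum F m = 0.
Proof.
  intros H. induction m as [|m IH]; simpl; auto.
  rewrite IH, H by auto. apply C_ext; Csimpl; ring.
Qed.

Lemma Re_RtoC_mult r z : Re (Cmult (RtoC r) z) = r * Re z.
Proof. Csimpl. ring. Qed.

Lemma Im_RtoC_mult r z : Im (Cmult (RtoC r) z) = r * Im z.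
Proof. Csimpl. ring. Qed.

Definition CDsub (nu : C) (f : R -> C) : R -> C := fun x => Cminus (CDn 1 f x) (Cmult nu (f x)).

Lemma apply_ops_cons nu M f : apply_ops (nu :: M) f = CDsub nu (apply_ops M f).
Proof. reflexivity. Qed.

Lemma Re_CDsub nu f x : Re (CDsub nu f x) =
  Derive (fun t => Re (f t)) x - (Re nu * Re (f x) - Im nu * Im (f x)).
Proof. unfold CDsub. Csimpl. ring. Qed.

Lemma Im_CDsub nu f x : Im (CDsub nu f x) =
  Derive (fun t => Im (f t)) x - (Re nu * Im (f x) + Im nu * Re (f x)).
Proof. unfold CDsub. Csimpl. ring. Qed.

Lemma Re_CDsub_real mu f : (fun t => Re (CDsub (RtoC mu) f t)) = Dsub mu (fun t => Re (f t)).
Proof. apply functional_extensionality. intros t. rewrite Re_CDsub. unfold Dsub. Csimpl. ring. Qed.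

Lemma Im_CDsub_real mu f : (fun t => Im (CDsub (RtoC mu) f t)) = Dsub mu (fun t => Im (f t)).
Proof. apply functional_extensionality. intros t. rewrite Im_CDsub. unfold Dsub. Csimpl. ring. Qed.

Lemma Csmooth_CDsub nu f : Csmooth f -> Csmooth (CDsub nu f).
Proof.
  rewrite !Csmooth_iff. intros [H1 H2]. split.
  - apply smooth_ext with (2 := smooth_minus _ _ (smooth_Derive _ H1)
      (smooth_minus _ _ (smooth_scal (Re nu) _ H1) (smooth_scal (Im nu) _ H2))).
    intros. rewrite Re_CDsub. reflexivity.
  - apply smooth_ext with (2 := smooth_minus _ _ (smooth_Derive _ H2)
      (smooth_plus _ _ (smooth_scal (Re nu) _ H2) (smooth_scal (Im nu) _ H1))).
    intros. rewrite Im_CDsub. reflexivity.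
Qed.

Lemma Csmooth_apply_ops M f : Csmooth f -> Csmooth (apply_ops M f).
Proof. intros H. induction M; simpl; auto. apply Csmooth_CDsub; auto. Qed.

Lemma CDn_CDsub nu f j x : Csmooth f ->
  CDn j (CDsub nu f) x = Cminus (CDn (S j) f x) (Cmult nu (CDn j f x)).
Proof.
  rewrite Csmooth_iff. intros [H1 H2]. apply C_ext; unfold CDn; simpl.
  - rewrite (Derive_n_ext _ (fun x => Derive (fun t => Re (f t)) x
      - (Re nu * Re (f x) - Im nu * Im (f x)))) by (intros; apply Re_CDsub).
    rewrite Derive_n_minus_smooth, Derive_n_Derive, Derive_n_minus_smooth, !Derive_n_scal_l.
    + Csimpl. ring.
    + apply smooth_scal, H1.
    + apply smooth_scal, H2.
    + apply smooth_Derive, H1.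
    + apply smooth_minus; apply smooth_scal; auto.
  - rewrite (Derive_n_ext _ (fun x => Derive (fun t => Im (f t)) x
      - (Re nu * Im (f x) + Im nu * Re (f x)))) by (intros; apply Im_CDsub).
    rewrite Derive_n_minus_smooth, Derive_n_Derive, Derive_n_plus_smooth, !Derive_n_scal_l.
    + Csimpl. ring.
    + apply smooth_scal, H2.
    + apply smooth_scal, H1.
    + apply smooth_Derive, H2.
    + apply smooth_plus; apply smooth_scal; auto.
Qed.

Lemma Derive_Re_CDsub nu f x : Csmooth f ->
  Derive (fun t => Re (CDsub nu f t)) x = Derive (Derive (fun t => Re (f t))) x
    - (Re nu * Derive (fun t => Re (f t)) x - Im nu * Derive (fun t => Im (f t)) x).
Proof. intros Hf. exact (f_equal Re (CDn_CDsub nu f 1 x Hf)). Qed.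

Lemma Derive_Im_CDsub nu f x : Csmooth f ->
  Derive (fun t => Im (CDsub nu f t)) x = Derive (Derive (fun t => Im (f t))) x
    - (Re nu * Derive (fun t => Im (f t)) x + Im nu * Derive (fun t => Re (f t)) x).
Proof. intros Hf. exact (f_equal Im (CDn_CDsub nu f 1 x Hf)). Qed.

Lemma CDsub_comm nu mu f x : Csmooth f -> CDsub nu (CDsub mu f) x = CDsub mu (CDsub nu f) x.
Proof.
  intros Hf. apply C_ext.
  - rewrite !Re_CDsub, !Im_CDsub, Derive_Re_CDsub, Derive_Re_CDsub by auto. ring.
  - rewrite !Im_CDsub, !Re_CDsub, Derive_Im_CDsub, Derive_Im_CDsub by auto. ring.
Qed.

Lemma apply_ops_CDsub M nu f : Csmooth f -> apply_ops M (CDsub nu f) = CDsub nu (apply_ops M f).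
Proof.
  intros Hf. induction M as [|mu M IH]; [reflexivity |].
  rewrite !apply_ops_cons, IH. apply functional_extensionality. intros x.
  apply CDsub_comm, Csmooth_apply_ops, Hf.
Qed.

Lemma CDsub_plus nu f g x : Csmooth f -> Csmooth g ->
  CDsub nu (fun y => Cplus (f y) (g y)) x = Cplus (CDsub nu f x) (CDsub nu g x).
Proof.
  rewrite !Csmooth_iff. intros [Hf1 Hf2] [Hg1 Hg2]. unfold CDsub. Csimpl.
  rewrite !Derive_plus by (apply smooth_ex_derive; auto).
  apply C_ext; Csimpl; ring.
Qed.

Lemma CDsub_scal nu c f x : Csmooth f ->
  CDsub nu (fun y => Cmult c (f y)) x = Cmult c (CDsub nu f x).
Proof.
  rewrite Csmooth_iff. intros [H1 H2]. unfold CDsub. Csimpl.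
  rewrite Derive_minus, Derive_plus, !Derive_scal by (apply smooth_ex_derive, smooth_scal; auto).
  apply C_ext; Csimpl; ring.
Qed.

Lemma apply_ops_plus M f g : Csmooth f -> Csmooth g ->
  apply_ops M (fun y => Cplus (f y) (g y)) = fun y => Cplus (apply_ops M f y) (apply_ops M g y).
Proof.
  intros Hf Hg. induction M as [|nu M IH]; [reflexivity |].
  rewrite !apply_ops_cons, IH. apply functional_extensionality. intros x.
  apply CDsub_plus; apply Csmooth_apply_ops; auto.
Qed.

Lemma apply_ops_scal M c f : Csmooth f ->
  apply_ops M (fun y => Cmult c (f y)) = fun y => Cmult c (apply_ops M f y).
Proof.
  intros Hf. induction M as [|nu M IH]; [reflexivity |].
  rewrite !apply_ops_cons, IH. apply functional_extensionality. intros x.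
  apply CDsub_scal, Csmooth_apply_ops, Hf.
Qed.

Lemma apply_ops_Csum M (F : nat -> R -> C) (c : nat -> C) m :
  (forall k, (k <= m)%nat -> Csmooth (F k)) ->
  apply_ops M (fun y => Csum (fun k => Cmult (c k) (F k y)) m) =
  fun y => Csum (fun k => Cmult (c k) (apply_ops M (F k) y)) m.
Proof.
  induction m as [|m IH]; intros H; simpl.
  - apply apply_ops_scal, H. lia.
  - assert (Hm : forall k, (k <= m)%nat -> Csmooth (F k)) by (intros; apply H; lia).
    assert (HSm : Csmooth (F (S m))) by (apply H; lia).
    rewrite apply_ops_plus, (IH Hm), (apply_ops_scal _ _ _ HSm).
    + reflexivity.
    + apply Csmooth_Csum. intros; apply Csmooth_scal; auto.
    + apply Csmooth_scal; auto.
Qed.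

Definition Cexp_lin (mu : R) : R -> C := fun y => RtoC (exp (mu * y)).

Lemma Csmooth_Cexp_lin mu : Csmooth (Cexp_lin mu).
Proof.
  apply Csmooth_iff. unfold Cexp_lin. Csimpl. split; [apply smooth_exp_lin | apply smooth_const].
Qed.

Lemma CDsub_Cexp_lin nu mu c x :
  CDsub nu (fun y => Cmult c (Cexp_lin mu y)) x = Cmult (Cmult c (Cminus (RtoC mu) nu)) (Cexp_lin mu x).
Proof.
  assert (D : forall k, Derive (fun t => k * exp (mu * t)) x = k * mu * exp (mu * x)).
  { intros k. apply is_derive_unique. auto_derive; auto. ring. }
  apply C_ext.
  - rewrite Re_CDsub. unfold Cexp_lin. Csimpl.
    rewrite (Derive_ext _ (fun t => fst c * exp (mu * t))) by (intros; ring). rewrite D. ring.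
  - rewrite Im_CDsub. unfold Cexp_lin. Csimpl.
    rewrite (Derive_ext _ (fun t => snd c * exp (mu * t))) by (intros; ring). rewrite D. ring.
Qed.

Fixpoint eigen_factor (mu : R) (M : list C) : C :=
  match M with
  | nil => 1
  | nu :: M' => Cmult (eigen_factor mu M') (Cminus (RtoC mu) nu)
  end.

Lemma apply_ops_Cexp_lin M mu c :
  apply_ops M (fun y => Cmult c (Cexp_lin mu y)) =
  fun y => Cmult (Cmult c (eigen_factor mu M)) (Cexp_lin mu y).
Proof.
  induction M as [|nu M IH].
  - apply functional_extensionality. intros y. simpl. apply C_ext; Csimpl; ring.
  - rewrite apply_ops_cons, IH. apply functional_extensionality. intros x.
    rewrite CDsub_Cexp_lin. simpl. apply C_ext; Csimpl; ring.
Qed.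

(* [exp (-2 Re nu t) |h t|^2] has zero derivative. *)
Lemma CDsub_kernel_vanishes nu h a : Csmooth h -> (forall x, CDsub nu h x = 0) -> h a = 0 ->
  forall x, h x = 0.
Proof.
  intros Hs H0 Ha x. apply Csmooth_iff in Hs as [Hu Hv].
  assert (Du : forall t, Derive (fun t => Re (h t)) t = Re nu * Re (h t) - Im nu * Im (h t)).
  { intros t. pose proof (f_equal Re (H0 t)) as E. rewrite Re_CDsub in E.
    change (Re 0) with 0%R in E. lra. }
  assert (Dv : forall t, Derive (fun t => Im (h t)) t = Re nu * Im (h t) + Im nu * Re (h t)).
  { intros t. pose proof (f_equal Im (H0 t)) as E. rewrite Im_CDsub in E.
    change (Im 0) with 0%R in E. lra. }
  set (u := fun t => Re (h t)) in *. set (v := fun t => Im (h t)) in *.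
  set (phi := fun t => exp (-2 * Re nu * t) * (u t * u t + v t * v t)).
  assert (Dphi : forall t, derivable_pt_lim phi t 0).
  { intros t. apply is_derive_Reals. unfold phi.
    pose proof (Derive_correct u t (smooth_ex_derive u t Hu)) as HU.
    pose proof (Derive_correct v t (smooth_ex_derive v t Hv)) as HV.
    assert (He : is_derive (fun t => exp (-2 * Re nu * t)) t (-2 * Re nu * exp (-2 * Re nu * t))).
    { auto_derive; auto. ring. }
    pose proof (is_derive_mult _ _ t _ _ He (is_derive_plus _ _ t _ _
      (is_derive_mult _ _ t _ _ HU HU ltac:(intros; apply Rmult_comm))
      (is_derive_mult _ _ t _ _ HV HV ltac:(intros; apply Rmult_comm)))
      ltac:(intros; apply Rmult_comm)) as HM.
    unfold plus, mult in HM; simpl in HM. rewrite Du, Dv in HM.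
    match type of HM with is_derive _ _ ?l => replace 0 with l by (unfold u, v; eq_R; ring) end.
    exact HM. }
  assert (Hc : phi x = phi a).
  { destruct (Rtotal_order x a) as [Hl|[->|Hl]]; auto.
    - destruct (MVT_cor2 phi (fun _ => 0) x a Hl) as [c [Hc _]]; [intros; apply Dphi | lra].
    - destruct (MVT_cor2 phi (fun _ => 0) a x Hl) as [c [Hc _]]; [intros; apply Dphi | lra]. }
  assert (phi a = 0) as Hpa by (unfold phi, u, v; rewrite Ha; Csimpl; ring).
  rewrite Hpa in Hc. unfold phi in Hc. pose proof (exp_pos (-2 * Re nu * x)).
  assert (u x * u x + v x * v x = 0) by (apply Rmult_eq_reg_l with (exp (-2 * Re nu * x)); lra).
  apply C_ext; Csimpl; fold (u x) (v x); nra.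
Qed.

Lemma CDn_apply_ops_flat a M : forall f j, Csmooth f ->
  (forall i, (i <= j + length M)%nat -> CDn i f a = 0) -> CDn j (apply_ops M f) a = 0.
Proof.
  induction M as [|nu M IH]; intros f j Hs H.
  - simpl. apply H. simpl. lia.
  - rewrite apply_ops_cons, CDn_CDsub by (apply Csmooth_apply_ops, Hs).
    rewrite (IH f (S j)), (IH f j); auto.
    + apply C_ext; Csimpl; ring.
    + intros; apply H; simpl; lia.
    + intros; apply H; simpl; lia.
Qed.

Lemma apply_ops_kernel_flat a M : forall f, Csmooth f -> (forall x, apply_ops M f x = 0) ->
  (forall i, (i < length M)%nat -> CDn i f a = 0) -> forall x, f x = 0.
Proof.
  induction M as [|nu M IH]; intros f Hs H0 Hi x; [apply H0 |].
  apply IH; auto; [| intros; apply Hi; simpl; lia].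
  apply (CDsub_kernel_vanishes nu (apply_ops M f) a).
  - apply Csmooth_apply_ops, Hs.
  - exact H0.
  - replace (apply_ops M f a) with (CDn 0 (apply_ops M f) a) by (apply C_ext; reflexivity).
    apply CDn_apply_ops_flat; auto. intros; apply Hi. simpl. lia.
Qed.

Lemma Dsub_vanishing_on mu u a b : a < b -> smooth u -> (forall y, a <= y <= b -> u y = 0) ->
  forall x, a <= x <= b -> Dsub mu u x = 0.
Proof.
  intros Hab Hs H x Hx. unfold Dsub.
  rewrite H, (Derive_vanishing_on u a b x Hab Hx (smooth_ex_derive u x Hs) H) by auto. ring.
Qed.

Lemma CDn_real_on a b F c j : a < b -> Csmooth F -> (forall t, a <= t <= b -> Im (F t) = 0) ->
  a <= c <= b -> CDn j F c = RtoC (Derive_n (fun t => Re (F t)) j c).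
Proof.
  intros Hab Hs Him Hc. apply Csmooth_iff in Hs as [_ Hs2]. apply C_ext; [reflexivity |].
  apply (Derive_n_vanishing_on (fun t => Im (F t)) a b); auto.
Qed.

Lemma zero_count_le_ExtChebyshev m V a b F : a < b -> ExtChebyshev m V a b -> V F -> Csmooth F ->
  (forall t, a <= t <= b -> Im (F t) = 0) -> zero_count_le a b (fun x => Re (F x)) m.
Proof.
  intros Hab HV HF HsF ImF [x0 [Hx0 Hnz]] al be zs Ha Hb Hc Hz.
  assert (Hord : forall c k, a <= c <= b -> flat_to (fun x => Re (F x)) c k -> zero_order_ge F c k).
  { intros c k Hcab Hf j Hj. rewrite (CDn_real_on a b) by auto. rewrite Hf by auto. reflexivity. }
  assert (Hin : forall z, In z zs -> a < z < b) by (intros; eapply chain_in; eauto).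
  assert (HnzF : exists x, a <= x <= b /\ F x <> RtoC 0).
  { exists x0. split; auto. intros E. apply Hnz. rewrite E. reflexivity. }
  pose proof (HV F HF HnzF ((a, al) :: (b, be) :: map (fun z => (z, 1%nat)) zs)) as Hbound.
  simpl in Hbound. rewrite map_map, map_id in Hbound. simpl in Hbound.
  assert (Hones : forall l : list R,
    fold_right (fun z s => (snd z + s)%nat) 0%nat (map (fun z => (z, 1%nat)) l) = length l)
    by (induction l; simpl; auto).
  rewrite Hones in Hbound. cut (al + (be + length zs) <= m)%nat; [lia |].
  apply Hbound.
  - constructor; [| constructor].
    + intros [E|E]; [lra |]. apply Hin in E. lra.
    + intros E. apply Hin in E. lra.
    + eapply chain_NoDup; eauto.
  - intros z [<-|[<-|E]]; simpl.
    + split; [lra |]. apply Hord; auto. lra.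
    + split; [lra |]. apply Hord; auto. lra.
    + apply in_map_iff in E as [y [<- Hy]]. simpl. pose proof (Hin y Hy).
      split; [lra |]. apply Hord; [lra |]. intros i Hi. replace i with 0%nat by lia. apply Hz, Hy.
Qed.

Lemma Re_Csum_real (gam : nat -> R) (F : nat -> C) m :
  Re (Csum (fun k => Cmult (RtoC (gam k)) (F k)) m) = sum_n (fun k => gam k * Re (F k)) m.
Proof. rewrite Re_Csum. apply sum_n_ext. intros k. apply Re_RtoC_mult. Qed.

Lemma Im_Csum_real (gam : nat -> R) (F : nat -> C) m : (forall k, (k <= m)%nat -> Im (F k) = 0) ->
  Im (Csum (fun k => Cmult (RtoC (gam k)) (F k)) m) = 0.
Proof.
  intros H. rewrite Im_Csum. apply sum_n_zero. intros k Hk. rewrite Im_RtoC_mult, H; auto. ring.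
Qed.

Section Bernstein_basis.
Variables (a b lam0 lam1 : R) (lams : list C) (p : nat -> R -> C) (n : nat).
Hypothesis Hn : n = S (length lams).
Hypothesis Hab : a < b.
Hypothesis Hlam : lam0 < lam1.
Hypothesis HECT : ExtChebyshev (length lams - 1) (ExpPoly lams) a b.
Hypothesis HB : BernsteinBasis n (ExpPoly (RtoC lam0 :: RtoC lam1 :: lams)) a b p.
Hypothesis Hreal : forall k x, (k <= n)%nat -> a <= x <= b -> Im (p k x) = 0 /\ 0 <= Re (p k x).

Definition P (k : nat) : R -> R := fun x => Re (p k x).

Lemma Csmooth_p k : (k <= n)%nat -> Csmooth (p k).
Proof. intros Hk. apply (HB k Hk). Qed.

Lemma smooth_P k : (k <= n)%nat -> smooth (P k).
Proof. intros Hk. apply (Csmooth_iff (p k)), Csmooth_p, Hk. Qed.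

Lemma P_nonneg k x : (k <= n)%nat -> a <= x <= b -> 0 <= P k x.
Proof. apply Hreal. Qed.

Lemma P_order k c m : (k <= n)%nat -> a <= c <= b -> zero_order_exact (p k) c m ->
  flat_to (P k) c m /\ Derive_n (P k) m c <> 0.
Proof.
  intros Hk Hc [Hz Hnz].
  assert (E : forall j, CDn j (p k) c = RtoC (Derive_n (P k) j c)).
  { intros j. apply (CDn_real_on a b); auto using Csmooth_p. intros; apply Hreal; auto. }
  split.
  - intros i Hi. specialize (Hz i Hi). rewrite E in Hz. exact (f_equal Re Hz).
  - intros H0. apply Hnz. rewrite E, H0. reflexivity.
Qed.

Lemma P_order_a k : (k <= n)%nat -> flat_to (P k) a k /\ Derive_n (P k) k a <> 0.
Proof. intros Hk. apply P_order; [auto | lra | apply (HB k Hk)]. Qed.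

Lemma P_order_b k : (k <= n)%nat -> flat_to (P k) b (n - k) /\ Derive_n (P k) (n - k) b <> 0.
Proof. intros Hk. apply P_order; [auto | lra | apply (HB k Hk)]. Qed.

Lemma P_at_a k : (1 <= k <= n)%nat -> P k a = 0.
Proof. intros Hk. apply (flat_to_value _ _ _ (proj1 (P_order_a k ltac:(lia)))). lia. Qed.

Lemma P_at_b k : (k < n)%nat -> P k b = 0.
Proof. intros Hk. apply (flat_to_value _ _ _ (proj1 (P_order_b k ltac:(lia)))). lia. Qed.

(* Triangular system: [P k] is the first basis function with a nonzero [k]-th derivative at [a]. *)
Lemma exp_lin_jet_coefficients mu m : (m <= n)%nat -> exists c : nat -> R,
  forall i, (i <= m)%nat -> mu ^ i * exp (mu * a) = sum_n (fun k => c k * Derive_n (P k) i a) m.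
Proof.
  induction m as [|m IH]; intros Hm.
  - destruct (P_order_a 0 ltac:(lia)) as [_ H0].
    exists (fun _ => exp (mu * a) / Derive_n (P 0) 0 a). intros i Hi.
    replace i with 0%nat by lia. rewrite sum_O. simpl in *. field. auto.
  - destruct (IH ltac:(lia)) as [c Hc].
    destruct (P_order_a (S m) Hm) as [Hz H0].
    set (d := (mu ^ S m * exp (mu * a) - sum_n (fun k => c k * Derive_n (P k) (S m) a) m)
              / Derive_n (P (S m)) (S m) a).
    exists (fun k => if Nat.eqb k (S m) then d else c k). intros i Hi.
    rewrite sum_Sn, Nat.eqb_refl.
    rewrite (sum_n_ext_loc _ (fun k => c k * Derive_n (P k) i a))
      by (intros k Hk; destruct (Nat.eqb_spec k (S m)); auto; lia).
    destruct (Nat.eq_dec i (S m)) as [->|Hne].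
    + unfold d, plus. simpl. field. auto.
    + rewrite (Hz i), <- Hc by lia. unfold plus. simpl. ring.
Qed.

(* [exp (mu x) - sum c_k p_k] solves the order-[n+1] equation and has a vanishing
   [n]-jet at [a]. *)
Lemma exp_lin_expansion mu : mu = lam0 \/ mu = lam1 ->
  exists c : nat -> R, forall x, exp (mu * x) = sum_n (fun k => c k * P k x) n.
Proof.
  intros Hmu. destruct (exp_lin_jet_coefficients mu n (le_n n)) as [c Hc].
  set (G := fun y => Cplus (Cmult 1 (Cexp_lin mu y)) (Csum (fun k => Cmult (RtoC (- c k)) (p k y)) n)).
  assert (HsG : Csmooth G).
  { apply Csmooth_plus; [apply Csmooth_scal, Csmooth_Cexp_lin |].
    apply Csmooth_Csum. intros; apply Csmooth_scal, Csmooth_p; auto. }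
  assert (ReG : forall t, Re (G t) = exp (mu * t) - sum_n (fun k => c k * P k t) n).
  { intros t. unfold G. rewrite re_plus, Re_Csum_real.
    rewrite (sum_n_ext _ (fun k => - (c k * P k t))) by (intros; unfold P; eq_R; ring).
    rewrite sum_n_opp. unfold Cexp_lin. Csimpl. ring. }
  assert (ImG : forall t, a <= t <= b -> Im (G t) = 0).
  { intros t Ht. unfold G. rewrite im_plus, Im_Csum_real.
    - unfold Cexp_lin. Csimpl. ring.
    - intros; apply Hreal; auto. }
  assert (Hode : forall x, apply_ops (RtoC lam0 :: RtoC lam1 :: lams) G x = 0).
  { intros x. unfold G. rewrite apply_ops_plus, apply_ops_Cexp_lin, apply_ops_Csum.
    - rewrite Csum_zero by (intros k Hk; rewrite (proj2 (proj1 (HB k Hk))); apply C_ext; Csimpl; ring).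
      apply C_ext; simpl; destruct Hmu; subst; unfold Cexp_lin; Csimpl; ring.
    - intros; apply Csmooth_p; auto.
    - apply Csmooth_scal, Csmooth_Cexp_lin.
    - apply Csmooth_Csum. intros; apply Csmooth_scal, Csmooth_p; auto. }
  assert (HG0 : forall x, G x = 0).
  { apply (apply_ops_kernel_flat a _ G HsG Hode). intros i Hi. simpl in Hi.
    rewrite (CDn_real_on a b) by (auto; lra).
    rewrite (Derive_n_ext _ (fun t => exp (mu * t) - sum_n (fun k => c k * P k t) n)) by apply ReG.
    assert (HsP : forall k, (k <= n)%nat -> smooth (fun x => c k * P k x))
      by (intros; apply smooth_scal, smooth_P; auto).
    rewrite Derive_n_minus_smooth, Derive_n_exp_lin, Derive_n_sum_n_smooth, (Hc i).
    - rewrite (sum_n_ext _ (fun k => Derive_n (fun x => c k * P k x) i a))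
        by (intros; symmetry; apply Derive_n_scal_l). apply C_ext; Csimpl; ring.
    - lia.
    - exact HsP.
    - apply smooth_exp_lin.
    - apply smooth_sum_n, HsP. }
  exists c. intros x. pose proof (f_equal Re (HG0 x)) as E. rewrite ReG in E. Csimpl. lra.
Qed.

Definition P_Dsub2 (k : nat) : R -> R := Dsub lam1 (Dsub lam0 (P k)).

Lemma apply_ops_CDsub2 k x : (k <= n)%nat ->
  apply_ops lams (CDsub (RtoC lam1) (CDsub (RtoC lam0) (p k))) x = 0.
Proof.
  intros Hk. pose proof (Csmooth_p k Hk) as Hs.
  rewrite (apply_ops_CDsub _ _ _ (Csmooth_CDsub _ _ Hs)), (apply_ops_CDsub _ _ _ Hs).
  rewrite CDsub_comm by (apply Csmooth_apply_ops, Hs).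
  exact (proj2 (proj1 (HB k Hk)) x).
Qed.

(* The Chebyshev hypothesis enters here, applied to a real combination of the
   [(D - lam1) (D - lam0) p_k], which lie in [E_lams] and are real on [a, b]. *)
Lemma zero_count_P_Dsub2 (gam : nat -> R) :
  zero_count_le a b (fun x => sum_n (fun i => gam i * P_Dsub2 i x) n) (n - 2).
Proof.
  set (F := fun y =>
    Csum (fun i => Cmult (RtoC (gam i)) (CDsub (RtoC lam1) (CDsub (RtoC lam0) (p i)) y)) n).
  assert (HsF : Csmooth F).
  { apply Csmooth_Csum. intros. apply Csmooth_scal, Csmooth_CDsub, Csmooth_CDsub, Csmooth_p. auto. }
  apply zero_count_le_ext with (fun x => Re (F x)).
  { intros x. unfold F. rewrite Re_Csum_real. apply sum_n_ext. intros k.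
    change (Re (CDsub (RtoC lam1) (CDsub (RtoC lam0) (p k)) x))
      with ((fun t => Re (CDsub (RtoC lam1) (CDsub (RtoC lam0) (p k)) t)) x).
    rewrite !Re_CDsub_real. reflexivity. }
  replace (n - 2)%nat with (length lams - 1)%nat by lia.
  apply (zero_count_le_ExtChebyshev _ (ExpPoly lams)); auto.
  - split; auto. intros x. unfold F. rewrite apply_ops_Csum.
    + apply Csum_zero. intros k Hk. rewrite apply_ops_CDsub2 by auto. apply C_ext; Csimpl; ring.
    + intros. apply Csmooth_CDsub, Csmooth_CDsub, Csmooth_p. auto.
  - intros x Hx. unfold F. apply Im_Csum_real. intros k Hk.
    change (Im (CDsub (RtoC lam1) (CDsub (RtoC lam0) (p k)) x))
      with ((fun t => Im (CDsub (RtoC lam1) (CDsub (RtoC lam0) (p k)) t)) x).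
    pose proof (proj2 (proj1 (Csmooth_iff _) (Csmooth_p k Hk))) as HsIm.
    rewrite !Im_CDsub_real. apply (Dsub_vanishing_on _ _ a b); auto.
    + apply smooth_Dsub, HsIm.
    + apply (Dsub_vanishing_on _ _ a b); auto. intros; apply Hreal; auto.
Qed.

Definition in_P_Dsub2_span (G : R -> R) : Prop :=
  exists gam : nat -> R, forall x, G x = sum_n (fun i => gam i * P_Dsub2 i x) n.

Lemma zero_count_P_Dsub2_span G : in_P_Dsub2_span G -> zero_count_le a b G (n - 2).
Proof.
  intros [gam H]. apply zero_count_le_ext with (fun x => sum_n (fun i => gam i * P_Dsub2 i x) n).
  - intros. symmetry. auto.
  - apply zero_count_P_Dsub2.
Qed.

Lemma P_Dsub2_span_partial (be : nat -> R) j : (j <= n)%nat ->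
  in_P_Dsub2_span (fun x => sum_n (fun i => be i * P_Dsub2 i x) j).
Proof.
  intros Hj. exists (fun i => if Nat.leb i j then be i else 0). intros x.
  rewrite (sum_n_pad _ j n Hj). apply sum_n_ext. intros k. eq_R. destruct (Nat.leb k j); ring.
Qed.

Lemma P_Dsub2_span_comb (F : nat -> R -> R) (w : nat -> R) m :
  (forall k, (k <= m)%nat -> in_P_Dsub2_span (F k)) ->
  in_P_Dsub2_span (fun x => sum_n (fun k => w k * F k x) m).
Proof.
  induction m as [|m IH]; intros H.
  - destruct (H 0%nat (le_n 0)) as [gam Hg]. exists (fun i => w 0%nat * gam i). intros x.
    rewrite sum_O, Hg, <- sum_n_scal. apply sum_n_ext. intros. eq_R. ring.
  - destruct IH as [g1 H1]; [intros; apply H; lia |].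
    destruct (H (S m) (le_n _)) as [g2 H2].
    exists (fun i => 1 * g1 i + w (S m) * g2 i). intros x.
    rewrite sum_Sn, H1, H2.
    rewrite (sum_n_ext (fun i => (1 * g1 i + w (S m) * g2 i) * P_Dsub2 i x)
      (fun i => 1 * (g1 i * P_Dsub2 i x) + w (S m) * (g2 i * P_Dsub2 i x))) by (intros; eq_R; ring).
    rewrite sum_n_lin. unfold plus. simpl. ring.
Qed.

Lemma P_Dsub2_nil k x : lams = nil -> (k <= n)%nat -> P_Dsub2 k x = 0.
Proof.
  intros E Hk. pose proof (apply_ops_CDsub2 k x Hk) as H0. rewrite E in H0. simpl in H0.
  unfold P_Dsub2, P. rewrite <- !Re_CDsub_real. rewrite H0. reflexivity.
Qed.

(* One more Rolle step on top of the Chebyshev bound; when [lams] is empty the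
   [(D - lam1) (D - lam0) p_k] vanish and [D - lam1] kills the partial sums. *)
Lemma zero_count_Dsub_partial_P (c : nat -> R) j : (j <= n)%nat ->
  zero_count_le a b (Dsub_partial P lam0 c j) (n - 1).
Proof.
  intros Hj.
  assert (HsP : forall k, (k <= j)%nat -> smooth (P k)) by (intros; apply smooth_P; lia).
  assert (HD : forall x, Dsub lam1 (Dsub_partial P lam0 c j) x = sum_n (fun k => c k * P_Dsub2 k x) j).
  { intros x. unfold Dsub_partial. rewrite Dsub_sum_n; [reflexivity |].
    intros; apply smooth_Dsub; auto. }
  destruct (Nat.eq_dec (length lams) 0) as [El|El].
  - replace (n - 1)%nat with 0%nat by lia. apply length_zero_iff_nil in El.
    apply (zero_count_le_Dsub_kernel lam1); auto; [apply smooth_Dsub_partial; auto |].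
    intros x _. rewrite HD. apply sum_n_zero. intros k Hk. rewrite P_Dsub2_nil by (auto; lia). ring.
  - replace (n - 1)%nat with (S (n - 2)) by lia.
    apply (zero_count_le_Dsub lam1); auto; [apply smooth_Dsub_partial; auto |].
    apply zero_count_le_ext with (fun x => sum_n (fun k => c k * P_Dsub2 k x) j).
    + intros. symmetry. auto.
    + apply zero_count_P_Dsub2_span, P_Dsub2_span_partial, Hj.
Qed.

Section Ratios.
Variables (c0 c1 : nat -> R).
Hypothesis Hc0 : forall x, exp (lam0 * x) = sum_n (fun k => c0 k * P k x) n.
Hypothesis Hc1 : forall x, exp (lam1 * x) = sum_n (fun k => c1 k * P k x) n.

Let Hcount0 j (Hj : (j < n)%nat) : zero_count_le a b (Dsub_partial P lam0 c0 j) (n - 1) :=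
  zero_count_Dsub_partial_P c0 j (Nat.lt_le_incl _ _ Hj).

Lemma c0_pos k : (k <= n)%nat -> c0 k > 0.
Proof.
  exact (expansion_coefficients_pos a b lam0 n P c0 Hab smooth_P P_nonneg P_order_a P_order_b
    (fun x _ => Hc0 x) Hcount0 k).
Qed.

(* For [j < n] the [Q j] form a non-negative Bernstein-type system of order [n - 1]. *)
Definition Q (j : nat) : R -> R := Dsub_partial P lam0 (fun i => - c0 i) j.

Lemma Q_opp j x : Q j x = - Dsub_partial P lam0 c0 j x.
Proof.
  unfold Q, Dsub_partial. rewrite <- sum_n_opp. apply sum_n_ext. intros. eq_R. ring.
Qed.

Lemma smooth_Q j : (j <= n - 1)%nat -> smooth (Q j).
Proof. intros Hj. apply smooth_Dsub_partial. intros; apply smooth_P; lia. Qed.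

Lemma Q_nonneg j x : (j <= n - 1)%nat -> a <= x <= b -> 0 <= Q j x.
Proof.
  intros Hj Hx. rewrite Q_opp.
  pose proof (Dsub_partial_nonpos a b lam0 n P c0 Hab smooth_P P_nonneg P_order_a P_order_b
    (fun x _ => Hc0 x) Hcount0 j ltac:(lia) x Hx). lra.
Qed.

Lemma Derive_n_Q j i x : Derive_n (Q j) i x = - Derive_n (Dsub_partial P lam0 c0 j) i x.
Proof.
  rewrite (Derive_n_ext _ (fun y => - Dsub_partial P lam0 c0 j y)) by apply Q_opp.
  apply Derive_n_opp.
Qed.

Lemma Q_order_a j : (j <= n - 1)%nat -> flat_to (Q j) a j /\ Derive_n (Q j) j a <> 0.
Proof.
  intros Hj.
  destruct (Dsub_partial_flat_a a b lam0 n P c0 Hab smooth_P P_order_a (fun x _ => Hc0 x) j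
    ltac:(lia)) as [Hf E].
  split.
  - intros i Hi. rewrite Derive_n_Q, Hf by auto. ring.
  - rewrite Derive_n_Q, E. pose proof (c0_pos (S j) ltac:(lia)).
    pose proof (proj2 (P_order_a (S j) ltac:(lia))). intros Hzero.
    assert (c0 (S j) * Derive_n (P (S j)) (S j) a = 0) as H1 by lra.
    apply Rmult_integral in H1. lra.
Qed.

Lemma Q_order_b j : (j <= n - 1)%nat ->
  flat_to (Q j) b (n - 1 - j) /\ Derive_n (Q j) (n - 1 - j) b <> 0.
Proof.
  intros Hj. destruct (Dsub_partial_flat_b b lam0 n P c0 smooth_P P_order_b j ltac:(lia)) as [Hf E].
  split.
  - intros i Hi. rewrite Derive_n_Q, Hf by auto. ring.
  - rewrite Derive_n_Q, E. pose proof (c0_pos j ltac:(lia)).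
    pose proof (proj2 (P_order_b j ltac:(lia))). intros Hzero.
    assert (c0 j * Derive_n (P j) (n - j) b = 0) as H1 by lra.
    apply Rmult_integral in H1. lra.
Qed.

Lemma zero_count_Dsub_partial_Q (w : nat -> R) j : (j <= n - 1)%nat ->
  zero_count_le a b (Dsub_partial Q lam1 w j) (n - 1 - 1).
Proof.
  intros Hj. replace (n - 1 - 1)%nat with (n - 2)%nat by lia.
  apply zero_count_P_Dsub2_span, P_Dsub2_span_comb. intros k Hk.
  destruct (P_Dsub2_span_partial (fun i => - c0 i) k ltac:(lia)) as [gam Hg].
  exists gam. intros x. rewrite <- Hg. unfold Q, Dsub_partial, P_Dsub2.
  rewrite Dsub_sum_n; [reflexivity |]. intros; apply smooth_Dsub, smooth_P; lia.
Qed.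

Definition ratio (k : nat) : R := c1 k / c0 k.

Definition ratio_gap (j : nat) : R := (ratio (S j) - ratio j) / (lam1 - lam0).

Lemma ratio_mul k : (k <= n)%nat -> ratio k * c0 k = c1 k.
Proof. intros Hk. pose proof (c0_pos k Hk). unfold ratio. field. lra. Qed.

Lemma Dsub_partial_exp_expansion (c : nat -> R) mu x :
  (forall y, exp (mu * y) = sum_n (fun k => c k * P k y) n) ->
  Dsub_partial P lam0 c n x = (mu - lam0) * exp (mu * x).
Proof.
  intros Hc. rewrite Dsub_partial_Dsub by (intros; apply smooth_P; auto).
  rewrite <- Dsub_exp_lin. unfold Dsub.
  rewrite (Derive_ext _ (fun y => exp (mu * y))) by (intros; symmetry; apply Hc).
  rewrite <- Hc. reflexivity.
Qed.

Lemma ratio_telescope m x : (m < n)%nat ->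
  sum_n (fun j => (ratio (S j) - ratio j) * Dsub_partial P lam0 c0 j x) m =
  ratio (S m) * Dsub_partial P lam0 c0 m x - Dsub_partial P lam0 c1 m x :> R.
Proof.
  induction m as [|m IH]; intros Hm; unfold Dsub_partial in *.
  - rewrite !sum_O, <- (ratio_mul 0) by lia. ring.
  - rewrite !sum_Sn, IH by lia. rewrite <- (ratio_mul (S m)) by lia. unfold plus. simpl. ring.
Qed.

Lemma exp_lam1_Q_expansion x : exp (lam1 * x) = sum_n (fun j => ratio_gap j * Q j x) (n - 1).
Proof.
  rewrite (sum_n_ext _ (fun j => (- / (lam1 - lam0)) *
      ((ratio (S j) - ratio j) * Dsub_partial P lam0 c0 j x)))
    by (intros; rewrite Q_opp; unfold ratio_gap; eq_R; field; lra).
  rewrite sum_n_scal, ratio_telescope by lia.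
  pose proof (Dsub_partial_exp_expansion c0 lam0 x Hc0) as E0.
  pose proof (Dsub_partial_exp_expansion c1 lam1 x Hc1) as E1.
  unfold Dsub_partial in E0, E1 |- *.
  replace n with (S (n - 1)) in E0, E1 by lia. rewrite sum_Sn in E0, E1.
  replace (S (n - 1)) with n in * by lia.
  rewrite <- (ratio_mul n) in E1 by lia. unfold plus in E0, E1. simpl in E0, E1.
  field_simplify_eq; [| lra]. nra.
Qed.

Lemma ratio_increasing j : (j < n)%nat -> ratio j < ratio (S j).
Proof.
  intros Hj.
  pose proof (expansion_coefficients_pos a b lam1 (n - 1) Q ratio_gap Hab smooth_Q Q_nonneg
    Q_order_a Q_order_b (fun x _ => exp_lam1_Q_expansion x)
    (fun j Hj => zero_count_Dsub_partial_Q ratio_gap j (Nat.lt_le_incl _ _ Hj)) j ltac:(lia)) as H.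
  unfold ratio_gap in H. apply Rmult_lt_compat_r with (r := lam1 - lam0) in H; [| lra].
  unfold Rdiv in H. rewrite Rmult_assoc, Rinv_l in H by lra. lra.
Qed.

Lemma ratio_at_endpoint k c : (k <= n)%nat -> (forall i, (i <= n)%nat -> i <> k -> P i c = 0) ->
  ratio k = exp ((lam1 - lam0) * c).
Proof.
  intros Hk Hz. pose proof (Hc0 c) as E0. pose proof (Hc1 c) as E1.
  rewrite (sum_n_single _ k) in E0 by (auto; intros i Hi Hik; rewrite Hz; auto; ring).
  rewrite (sum_n_single _ k) in E1 by (auto; intros i Hi Hik; rewrite Hz; auto; ring).
  apply Rmult_eq_reg_r with (exp (lam0 * c)); [| apply Rgt_not_eq, exp_pos].
  rewrite <- exp_plus. replace ((lam1 - lam0) * c + lam0 * c) with (lam1 * c) by ring.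
  rewrite E0, E1, <- (ratio_mul k Hk). ring.
Qed.

Lemma ratio_at_a : ratio 0 = exp ((lam1 - lam0) * a).
Proof. apply ratio_at_endpoint; [lia |]. intros i Hi Hi0. apply P_at_a. lia. Qed.

Lemma ratio_at_b : ratio n = exp ((lam1 - lam0) * b).
Proof. apply ratio_at_endpoint; [lia |]. intros i Hi Hin. apply P_at_b. lia. Qed.

Lemma ratio_le i k : (i <= k <= n)%nat -> ratio i <= ratio k.
Proof.
  intros [Hik Hkn]. induction Hik as [|k Hik IH]; [lra |].
  pose proof (ratio_increasing k ltac:(lia)). specialize (IH ltac:(lia)). lra.
Qed.

Definition node (k : nat) : R := ln (ratio k) / (lam1 - lam0).

Definition weight (k : nat) : R := c0 k * exp (- lam0 * node k).

Lemma exp_node k : (k <= n)%nat -> exp ((lam1 - lam0) * node k) = ratio k.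
Proof.
  intros Hk. pose proof (ratio_le 0 k ltac:(lia)). pose proof (exp_pos ((lam1 - lam0) * a)).
  unfold node. replace ((lam1 - lam0) * (ln (ratio k) / (lam1 - lam0))) with (ln (ratio k))
    by (field; lra).
  apply exp_ln. rewrite ratio_at_a in *. lra.
Qed.

Lemma node_in_interval k : (k <= n)%nat -> a <= node k <= b.
Proof.
  intros Hk. pose proof (ratio_le 0 k ltac:(lia)) as Ha. pose proof (ratio_le k n ltac:(lia)) as Hb.
  rewrite ratio_at_a, <- (exp_node k Hk) in Ha. rewrite ratio_at_b, <- (exp_node k Hk) in Hb.
  assert (exp_le_inv : forall u v, exp u <= exp v -> u <= v).
  { intros u v Huv. apply Rnot_lt_le. intros Hlt. apply exp_increasing in Hlt. lra. }
  apply exp_le_inv in Ha, Hb. split; nra.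
Qed.

Lemma weight_pos k : (k <= n)%nat -> 0 < weight k.
Proof. intros Hk. apply Rmult_lt_0_compat; [apply c0_pos, Hk | apply exp_pos]. Qed.

Lemma node_weight_lam0 k : exp (lam0 * node k) * weight k = c0 k.
Proof.
  unfold weight. rewrite Rmult_comm, Rmult_assoc, <- exp_plus.
  replace (- lam0 * node k + lam0 * node k) with 0 by ring. rewrite exp_0. ring.
Qed.

Lemma node_weight_lam1 k : (k <= n)%nat -> exp (lam1 * node k) * weight k = c1 k.
Proof.
  intros Hk. replace (lam1 * node k) with ((lam1 - lam0) * node k + lam0 * node k) by ring.
  rewrite exp_plus, exp_node, Rmult_assoc, node_weight_lam0 by auto. apply ratio_mul, Hk.
Qed.

Lemma node_weight_unique k t al : (k <= n)%nat -> 0 < al ->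
  exp (lam0 * t) * al = c0 k -> exp (lam1 * t) * al = c1 k -> t = node k /\ al = weight k.
Proof.
  intros Hk Hal E0 E1.
  assert (Et : exp ((lam1 - lam0) * t) = ratio k).
  { apply Rmult_eq_reg_r with (exp (lam0 * t) * al).
    - transitivity (exp (lam1 * t) * al).
      + replace (lam1 * t) with ((lam1 - lam0) * t + lam0 * t) by ring. rewrite exp_plus. ring.
      + rewrite E1, <- (ratio_mul k Hk), <- E0. ring.
    - apply Rgt_not_eq, Rmult_lt_0_compat; [apply exp_pos | exact Hal]. }
  assert (t = node k) as ->.
  { apply Rmult_eq_reg_l with (lam1 - lam0); [| lra].
    apply exp_inv. rewrite Et, exp_node by auto. reflexivity. }
  split; auto.
  apply Rmult_eq_reg_l with (exp (lam0 * node k)); [| apply Rgt_not_eq, exp_pos].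
  rewrite E0, node_weight_lam0. reflexivity.
Qed.

End Ratios.

Lemma P_coefficients_unique (be ga : nat -> R) :
  (forall x, a <= x <= b -> sum_n (fun k => be k * P k x) n = sum_n (fun k => ga k * P k x) n) ->
  forall k, (k <= n)%nat -> be k = ga k.
Proof.
  intros H.
  set (d := fun k => be k - ga k).
  assert (Hd : forall x, a <= x <= b -> sum_n (fun k => d k * P k x) n = 0 :> R).
  { intros x Hx. unfold d.
    rewrite (sum_n_ext _ (fun k => be k * P k x - ga k * P k x)) by (intros; eq_R; ring).
    rewrite sum_n_minus, H; auto. ring. }
  assert (Hdn : forall i, Derive_n (fun x => sum_n (fun k => d k * P k x) n) i a = 0).
  { intros i. apply (Derive_n_vanishing_on _ a b Hab); auto; [| lra].
    apply smooth_sum_n. intros; apply smooth_scal, smooth_P; auto. }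
  assert (forall k, (k <= n)%nat -> d k = 0) as Hzero.
  { intros k. induction k as [k IH] using Wf_nat.lt_wf_ind. intros Hk.
    specialize (Hdn k). rewrite Derive_n_sum_n_smooth in Hdn
      by (intros; apply smooth_scal, smooth_P; auto).
    rewrite (sum_n_single _ k) in Hdn; [| exact Hk |].
    2: { intros i Hi Hik. rewrite Derive_n_scal_l. destruct (Nat.lt_ge_cases i k).
         - rewrite IH by lia. ring.
         - rewrite (proj1 (P_order_a i Hi)) by lia. ring. }
    rewrite Derive_n_scal_l in Hdn. apply Rmult_integral in Hdn as [|Hdn]; auto.
    exfalso. apply (proj2 (P_order_a k Hk)), Hdn. }
  intros k Hk. specialize (Hzero k Hk). unfold d in Hzero. lra.
Qed.

Lemma Bop_on_interval (t al : nat -> R) (f : R -> R) x : a <= x <= b ->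
  Bop n t al p f x = RtoC (sum_n (fun k => (f (t k) * al k) * P k x) n).
Proof.
  intros Hx. unfold Bop. apply C_ext.
  - rewrite Re_Csum_real. reflexivity.
  - rewrite Im_Csum_real; [reflexivity |]. intros; apply Hreal; auto.
Qed.

Lemma Bop_reproduces_exp (t al : nat -> R) mu (c : nat -> R) :
  (forall y, exp (mu * y) = sum_n (fun k => c k * P k y) n) ->
  ((forall x, a <= x <= b -> Bop n t al p (fun y => exp (mu * y)) x = RtoC (exp (mu * x))) <->
   (forall k, (k <= n)%nat -> exp (mu * t k) * al k = c k)).
Proof.
  intros Hc. split.
  - intros HB' k Hk. apply (P_coefficients_unique (fun k => exp (mu * t k) * al k) c); auto.
    intros x Hx.
    rewrite <- Hc. specialize (HB' x Hx). rewrite Bop_on_interval in HB' by auto.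
    exact (f_equal Re HB').
  - intros Hk x Hx. rewrite Bop_on_interval, Hc by auto. f_equal.
    apply sum_n_ext_loc. intros k Hk'. rewrite Hk; auto.
Qed.

Theorem exp_preserving_Bernstein_operator : exists t alpha : nat -> R,
    ((forall k, (k <= n)%nat -> a <= t k <= b /\ 0 < alpha k) /\
     (forall x, a <= x <= b ->
        Bop n t alpha p (fun y => exp (lam0 * y)) x = RtoC (exp (lam0 * x))) /\
     (forall x, a <= x <= b ->
        Bop n t alpha p (fun y => exp (lam1 * y)) x = RtoC (exp (lam1 * x)))) /\
    (forall t' alpha' : nat -> R,
       (forall k, (k <= n)%nat -> a <= t' k <= b /\ 0 < alpha' k) ->
       (forall x, a <= x <= b ->
          Bop n t' alpha' p (fun y => exp (lam0 * y)) x = RtoC (exp (lam0 * x))) ->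
       (forall x, a <= x <= b ->
          Bop n t' alpha' p (fun y => exp (lam1 * y)) x = RtoC (exp (lam1 * x))) ->
       forall k, (k <= n)%nat -> t' k = t k /\ alpha' k = alpha k).
Proof.
  destruct (exp_lin_expansion lam0 (or_introl eq_refl)) as [c0 Hc0].
  destruct (exp_lin_expansion lam1 (or_intror eq_refl)) as [c1 Hc1].
  exists (node c0 c1), (weight c0 c1). split; [split; [| split] |].
  - intros k Hk. split; [apply node_in_interval | apply weight_pos]; auto.
  - apply (Bop_reproduces_exp _ _ lam0 c0 Hc0). intros k _. apply node_weight_lam0.
  - apply (Bop_reproduces_exp _ _ lam1 c1 Hc1). intros k Hk. apply node_weight_lam1; auto.
  - intros t al Hta H0 H1 k Hk.
    apply (node_weight_unique c0 c1 Hc0 Hc1); auto.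
    + apply Hta, Hk.
    + apply (Bop_reproduces_exp t al lam0 c0 Hc0); auto.
    + apply (Bop_reproduces_exp t al lam1 c1 Hc1); auto.
Qed.

End Bernstein_basis.

Theorem theorem9 (a b lam0 lam1 : R) (lams : list C) (p : nat -> R -> C) :
  let n := S (length lams) in
  a < b ->
  lam0 < lam1 ->
  ExtChebyshev (length lams - 1) (ExpPoly lams) a b ->
  closed_under_conj (ExpPoly lams) ->
  BernsteinBasis n (ExpPoly (RtoC lam0 :: RtoC lam1 :: lams)) a b p ->
  (forall k x, (k <= n)%nat -> a <= x <= b -> Im (p k x) = 0 /\ 0 <= Re (p k x)) ->
  exists t alpha : nat -> R,
    ((forall k, (k <= n)%nat -> a <= t k <= b /\ 0 < alpha k) /\
     (forall x, a <= x <= b ->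
        Bop n t alpha p (fun y => exp (lam0 * y)) x = RtoC (exp (lam0 * x))) /\
     (forall x, a <= x <= b ->
        Bop n t alpha p (fun y => exp (lam1 * y)) x = RtoC (exp (lam1 * x)))) /\
    (forall t' alpha' : nat -> R,
       (forall k, (k <= n)%nat -> a <= t' k <= b /\ 0 < alpha' k) ->
       (forall x, a <= x <= b ->
          Bop n t' alpha' p (fun y => exp (lam0 * y)) x = RtoC (exp (lam0 * x))) ->
       (forall x, a <= x <= b ->
          Bop n t' alpha' p (fun y => exp (lam1 * y)) x = RtoC (exp (lam1 * x))) ->
       forall k, (k <= n)%nat -> t' k = t k /\ alpha' k = alpha k).
Proof.
  intros n Hab Hlam HECT _ HB Hreal.
  exact (exp_preserving_Bernstein_operator a b lam0 lam1 lams p n eq_refl Hab Hlam HECT HB Hreal).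
Qed.
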